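(* With splitting parameter $\gamma=2$ and fixed $N$ and $h=L/N$, the coefficients of the two-dimensional scheme satisfy $$\lim_{\alpha\to2^-}c_{2,\alpha}a_{10}=\lim_{\alpha\to2^-}c_{2,\alpha}a_{01}=\frac1{h^2},\qquad \lim_{\alpha\to2^-}c_{2,\alpha}a_{mn}=0\ \text{ for } m,n\ge0,\ m+n>1,\qquad \lim_{\alpha\to2^-}c_{2,\alpha}a_{00}=-\frac4{h^2}.$$ Moreover $\lim_{\alpha\to2^-}c_{2,\alpha}\int_{I_{00}}|\boldsymbol{\xi}|^{-\alpha}d\boldsymbol{\xi}=1$ and $\lim_{\alpha\to2^-}c_{2,\alpha}=0$. Consequently, the scheme reduces in this limit to the five-point central difference scheme for $-\Delta$.
   Context: $c_{2,\alpha}=\frac{2^{\alpha-1}\alpha\,\Gamma((2+\alpha)/2)}{\pi\,\Gamma(1-\alpha/2)}$. Let $L>0$, $N$ a positive integer, $h=L/N$, $\boldsymbol{\xi}_{mn}=(mh,nh)$, $I_{ij}=[ih,(i+1)h]\times[jh,(j+1)h]$, $D_1=(0,L)^2$, $D_2=[0,\infty)^2\setminus D_1$, and $T_{mn}=\big(I_{(m-1)(n-1)}\cup I_{(m-1)n}\cup I_{m(n-1)}\cup I_{mn}\big)\cap D_1$ (cells with negative index being empty). For $m,n\ge0$, $m+n>0$, with $\sigma(m,n)$ the number of zeros among $m,n$, $\bar c_{10}=\bar c_{01}=1$, $\bar c_{11}=-1$, $\bar c_{mn}=0$ otherwise, the coefficients are (for $\gamma=2$) $$a_{mn}=\frac{2^{\sigma(m,n)}}{4|\boldsymbol{\xi}_{mn}|^{2}}\Big(\int_{T_{mn}}|\boldsymbol{\xi}|^{-\alpha}d\boldsymbol{\xi}+\bar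 c_{mn}\int_{I_{00}}|\boldsymbol{\xi}|^{-\alpha}d\boldsymbol{\xi}\Big),$$ and $a_{00}=-2\sum_{m=1}^N(a_{m0}+a_{0m})-4\sum_{m,n=1}^Na_{mn}-4\int_{D_2}|\boldsymbol{\xi}|^{-(2+\alpha)}d\boldsymbol{\xi}$. The scheme is $(-\Delta)^{\alpha/2}_{h,2}u_{ij}=-c_{2,\alpha}\sum a_{|m||n|}u_{(i+m)(j+n)}$, summed over grid offsets $(m,n)$ with $(i+m,j+n)$ an interior grid index. *)

From Stdlib Require Import Reals Lra Lia ZArith Arith.
From Stdlib Require Import Classical ClassicalEpsilon.
Open Scope R_scope.

Definition is_lim_left (F : R -> R) (a l : R) : Prop :=
  forall eps, 0 < eps -> exists delta, 0 < delta /\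
    forall x, a - delta < x < a -> Rabs (F x - l) < eps.

Definition is_lim_right (F : R -> R) (a l : R) : Prop :=
  forall eps, 0 < eps -> exists delta, 0 < delta /\
    forall x, a < x < a + delta -> Rabs (F x - l) < eps.

Definition is_lim_pinfty (F : R -> R) (l : R) : Prop :=
  forall eps, 0 < eps -> exists M, forall x, M < x -> Rabs (F x - l) < eps.

(* the value of a limit (arbitrary if it does not exist) *)
Definition lim_right (F : R -> R) (a : R) : R :=
  epsilon (inhabits 0) (fun l => is_lim_right F a l).
Definition lim_pinfty (F : R -> R) : R :=
  epsilon (inhabits 0) (fun l => is_lim_pinfty F l).

(* Riemann integral of f over [a,b] (arbitrary if f is not integrable) *)
Definition RInt (f : R -> R) (a b : R) : R :=
  epsilon (inhabits 0)
    (fun v => exists pr : Riemann_integrable f a b, RiemannInt pr = v).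

Definition ImpInt0inf (g : R -> R) : R :=
  lim_right (fun a => lim_pinfty (fun b => RInt g a b)) 0.

Definition ind (S : R -> R -> Prop) (x y : R) : R :=
  if excluded_middle_informative (S x y) then 1 else 0.

(* integral over a set S contained in [0,oo)^2 of f (iterated improper integral) *)
Definition Int2 (S : R -> R -> Prop) (f : R -> R -> R) : R :=
  ImpInt0inf (fun x => ImpInt0inf (fun y => ind S x y * f x y)).

Definition Gamma (x : R) : R :=
  ImpInt0inf (fun t => Rpower t (x - 1) * exp (- t)).

Definition c2 (alpha : R) : R :=
  Rpower 2 (alpha - 1) * alpha * Gamma ((2 + alpha) / 2)
  / (PI * Gamma (1 - alpha / 2)).

Definition xipow (s : R) (x y : R) : R := Rpower (sqrt (x * x + y * y)) (- s).

Definition gridh (L : R) (N : nat) : R := L / INR N.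

Definition cell (h : R) (i j : Z) (x y : R) : Prop :=
  IZR i * h <= x <= (IZR i + 1) * h /\ IZR j * h <= y <= (IZR j + 1) * h.

Definition D1 (L : R) (x y : R) : Prop := (0 < x < L) /\ (0 < y < L).
Definition D2 (L : R) (x y : R) : Prop := 0 <= x /\ 0 <= y /\ ~ D1 L x y.

(* T_{mn}; cells with negative index are automatically empty after
   intersecting with the open square D1 *)
Definition Tmn (L h : R) (m n : nat) (x y : R) : Prop :=
  let m' := Z.of_nat m in let n' := Z.of_nat n in
  (cell h (m' - 1) (n' - 1) x y \/ cell h (m' - 1) n' x y \/
   cell h m' (n' - 1) x y \/ cell h m' n' x y) /\ D1 L x y.

Definition sigma (m n : nat) : nat :=
  (if Nat.eqb m 0 then 1 else 0) + (if Nat.eqb n 0 then 1 else 0).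

Definition cbar (m n : nat) : R :=
  match m, n with
  | 1%nat, 0%nat => 1
  | 0%nat, 1%nat => 1
  | 1%nat, 1%nat => -1
  | _, _ => 0
  end.

Definition amn (L : R) (N : nat) (alpha : R) (m n : nat) : R :=
  let h := gridh L N in
  2 ^ (sigma m n) / (4 * ((INR m * h) ^ 2 + (INR n * h) ^ 2)) *
  (Int2 (Tmn L h m n) (xipow alpha)
   + cbar m n * Int2 (cell h 0 0) (xipow alpha)).

Definition a00 (L : R) (N : nat) (alpha : R) : R :=
  - 2 * sum_f_R0 (fun k => amn L N alpha (S k) 0 + amn L N alpha 0 (S k)) (N - 1)
  - 4 * sum_f_R0 (fun k => sum_f_R0 (fun l => amn L N alpha (S k) (S l)) (N - 1)) (N - 1)
  - 4 * Int2 (D2 L) (xipow (2 + alpha)).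

Definition acoef (L : R) (N : nat) (alpha : R) (m n : nat) : R :=
  if (Nat.eqb m 0 && Nat.eqb n 0)%bool then a00 L N alpha else amn L N alpha m n.

Definition absdiff (p i : nat) : nat := ((p - i) + (i - p))%nat.

(* the scheme at interior index (i,j), interior indices being 1..N-1:
   sum over interior (p,q) = (i+m, j+n) of a_{|m||n|} u_{pq} *)
Definition scheme (L : R) (N : nat) (alpha : R) (u : nat -> nat -> R) (i j : nat) : R :=
  - c2 alpha *
  sum_f_R0 (fun k => sum_f_R0 (fun l =>
      acoef L N alpha (absdiff (S k) i) (absdiff (S l) j) * u (S k) (S l))
    (N - 2)) (N - 2).

Definition interior (N p : nat) : bool := (Nat.leb 1 p && Nat.leb p (N - 1))%bool.

Definition uext (N : nat) (u : nat -> nat -> R) (p q : nat) : R :=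
  if (interior N p && interior N q)%bool then u p q else 0.

Definition five_point (L : R) (N : nat) (u : nat -> nat -> R) (i j : nat) : R :=
  (4 * u i j - uext N u (i + 1) j - uext N u (i - 1) j
   - uext N u i (j + 1) - uext N u i (j - 1)) / (gridh L N) ^ 2.

From Pilot Require Import Defs.
From Stdlib Require Import Reals Lra Lia ZArith Arith List ClassicalEpsilon Bool FunctionalExtensionality.
From Coquelicot Require Import Coquelicot.
Open Scope R_scope.

(** As [alpha -> 2-], [c_{2,alpha} ~ (2 - alpha) * 2 / PI]: [Gamma (1 - alpha / 2)] has a
    simple pole and [Gamma ((2 + alpha) / 2) -> 1].  Of all the integrals entering the
    coefficients only the one over the corner cell [I_00], which contains the singularity of
    [|xi|^(-alpha)], blows up.  Integrating first in [y],
    [int_(I_00) |xi|^(-alpha) = int_0^h x^(1-alpha) K_alpha(h/x) dx] with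
    [K_alpha u = int_0^u (1 + t^2)^(-alpha/2) dt]; [K_alpha] lies above [atan] and, up to an
    error vanishing as [alpha -> 2], below [PI/2], so the integral is
    [~ (PI/2) h^(2-alpha) / (2 - alpha)] and [c_{2,alpha}] times it tends to [1].  The other
    cell integrals are at most [h^(2-alpha)] and the tail over [D_2] (exponent
    [2 + alpha >= 3]) is bounded as well, so [c_{2,alpha}] kills them.  Inside [D_1],
    [T_10 = I_00 u I_10] and [cbar_10 = 1], whence [c_{2,alpha} a_10 -> 1/h^2], and likewise
    for [a_01]; [cbar_11 = -1] removes [I_00] from [T_11] and the other [T_mn] do not meet it.
    Hence [a_00] tends to [-2 (1/h^2 + 1/h^2)]: the five-point stencil. *)

Implicit Types (g f F G P E : R -> R) (a b c d x y z v l m B M s t u T : R).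

(** * One-sided limits *)

Lemma ball_R_between (x e y : R) : ball x e y -> x - e < y < x + e.
Proof. intros H. assert (H' : Rabs (y - x) < e) by exact H. apply Rabs_lt_between in H'. lra. Qed.

Lemma between_ball_R (x e y : R) : x - e < y < x + e -> ball x e y.
Proof. intros H. change (Rabs (y - x) < e). apply Rabs_lt_between. lra. Qed.

Lemma is_lim_left_filterlim F a l :
  is_lim_left F a l <-> filterlim F (at_left a) (locally l).
Proof.
  rewrite filterlim_locally. split.
  - intros H eps. destruct (H eps (cond_pos eps)) as [d [Hd Hx]].
    exists (mkposreal d Hd). intros y Hy Hya. apply Hx.
    apply ball_R_between in Hy. simpl in Hy. lra.
  - intros H eps Heps. destruct (H (mkposreal eps Heps)) as [d Hd].
    exists d. split. apply cond_pos. intros x Hx.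
    apply Hd. apply between_ball_R. lra. lra.
Qed.

Lemma is_lim_left_const c a : is_lim_left (fun _ => c) a c.
Proof. intros e He. exists 1. split. lra. intros. rewrite Rminus_diag, Rabs_R0. lra. Qed.

Lemma is_lim_left_id a : is_lim_left (fun x => x) a a.
Proof. intros e He. exists e. split; auto. intros x Hx. rewrite Rabs_left; lra. Qed.

Lemma is_lim_left_plus F G a l m : is_lim_left F a l -> is_lim_left G a m ->
  is_lim_left (fun x => F x + G x) a (l + m).
Proof.
  rewrite !is_lim_left_filterlim. intros H1 H2.
  apply (filterlim_comp_2 _ _ _ H1 H2 (filterlim_plus l m)).
Qed.

Lemma is_lim_left_mult F G a l m : is_lim_left F a l -> is_lim_left G a m ->
  is_lim_left (fun x => F x * G x) a (l * m).
Proof.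
  rewrite !is_lim_left_filterlim. intros H1 H2.
  apply (filterlim_comp_2 _ _ _ H1 H2 (filterlim_mult l m)).
Qed.

Lemma is_lim_left_comp F g a l : is_lim_left F a l -> continuity_pt g l ->
  is_lim_left (fun x => g (F x)) a (g l).
Proof.
  rewrite !is_lim_left_filterlim, continuity_pt_filterlim. intros H1 H2.
  eapply filterlim_comp; eassumption.
Qed.

Lemma is_lim_left_continuous g a : continuity_pt g a -> is_lim_left g a (g a).
Proof. intros H. apply (is_lim_left_comp (fun x => x) g a a (is_lim_left_id a) H). Qed.

Lemma is_lim_left_ext_loc F G a l :
  (exists d, 0 < d /\ forall x, a - d < x < a -> F x = G x) ->
  is_lim_left F a l -> is_lim_left G a l.
Proof.
  intros [d [Hd HFG]] H e He. destruct (H e He) as [d' [Hd' Hx]].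
  exists (Rmin d d'). split. apply Rmin_pos; lra. intros x Hx'.
  pose proof (Rmin_l d d'). pose proof (Rmin_r d d').
  rewrite <- HFG by lra. apply Hx. lra.
Qed.

Lemma is_lim_left_opp F a l : is_lim_left F a l -> is_lim_left (fun x => - F x) a (- l).
Proof.
  intros H. replace (-l) with ((-1)*l) by ring.
  apply is_lim_left_ext_loc with (fun x => (-1) * F x).
  exists 1. split. lra. intros; ring.
  apply is_lim_left_mult. apply is_lim_left_const. exact H.
Qed.

Lemma Rpower_gt0 x p : 0 < Rpower x p.
Proof. apply exp_pos. Qed.

Lemma ex_derive_continuous_R (f : R -> R) x : ex_derive f x -> continuous f x.
Proof. exact (@ex_derive_continuous R_AbsRing R_NormedModule f x). Qed.

Lemma is_lim_left_Rpower_affine c k1 k2 a : 0 < c ->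
  is_lim_left (fun x => Rpower c (k1 + k2 * x)) a (Rpower c (k1 + k2 * a)).
Proof.
  intros Hc. apply (is_lim_left_continuous (fun x => Rpower c (k1 + k2 * x)) a).
  apply continuity_pt_filterlim.
  apply (ex_derive_continuous_R (fun x => Rpower c (k1 + k2 * x))).
  unfold Rpower. auto_derive. auto.
Qed.

Lemma is_lim_left_squeeze F a l :
  (forall eps, 0 < eps -> exists U Lo u lo, is_lim_left U a u /\ is_lim_left Lo a lo /\
     u < l + eps /\ l - eps < lo /\
     exists d, 0 < d /\ forall x, a - d < x < a -> Lo x <= F x <= U x) ->
  is_lim_left F a l.
Proof.
  intros H e He. destruct (H e He) as [U [Lo [u [lo [HU [HL [Hu [Hlo [d [Hd Hb]]]]]]]]]].
  destruct (HU (l + e - u)) as [d1 [Hd1 H1]]. lra.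
  destruct (HL (lo - (l - e))) as [d2 [Hd2 H2]]. lra.
  exists (Rmin d (Rmin d1 d2)). split. apply Rmin_pos. lra. apply Rmin_pos; lra.
  intros x Hx. pose proof (Rmin_l d (Rmin d1 d2)). pose proof (Rmin_r d (Rmin d1 d2)).
  pose proof (Rmin_l d1 d2). pose proof (Rmin_r d1 d2).
  specialize (Hb x ltac:(lra)). specialize (H1 x ltac:(lra)). specialize (H2 x ltac:(lra)).
  apply Rabs_lt_between in H1. apply Rabs_lt_between in H2. apply Rabs_lt_between. lra.
Qed.

Lemma is_lim_left_mult_bounded (c : R -> R) F a M : is_lim_left c a 0 ->
  (exists d, 0 < d /\ forall x, a - d < x < a -> Rabs (F x) <= M) ->
  is_lim_left (fun x => c x * F x) a 0.
Proof.
  intros Hc [d [Hd HB]] e He.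
  destruct (Hc (e / (Rabs M + 1))) as [d1 [Hd1 H1]].
  apply Rdiv_lt_0_compat. lra. pose proof (Rabs_pos M). lra.
  exists (Rmin d d1). split. apply Rmin_pos; lra. intros x Hx.
  pose proof (Rmin_l d d1). pose proof (Rmin_r d d1).
  specialize (H1 x ltac:(lra)). specialize (HB x ltac:(lra)).
  rewrite Rminus_0_r in *. rewrite Rabs_mult.
  pose proof (Rabs_pos M). pose proof (Rabs_pos (c x)). pose proof (Rle_abs M).
  apply Rle_lt_trans with (Rabs (c x) * (Rabs M + 1)).
  apply Rmult_le_compat_l. lra. lra.
  apply Rlt_le_trans with (e / (Rabs M + 1) * (Rabs M + 1)).
  apply Rmult_lt_compat_r. lra. exact H1. right. field. lra.
Qed.

Lemma is_lim_left_sum (F : nat -> R -> R) (l : nat -> R) a n :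
  (forall k, (k <= n)%nat -> is_lim_left (F k) a (l k)) ->
  is_lim_left (fun x => sum_f_R0 (fun k => F k x) n) a (sum_f_R0 l n).
Proof.
  induction n; intros H; simpl. apply H. lia.
  apply is_lim_left_plus. apply IHn. intros; apply H; lia. apply H; lia.
Qed.

(** * Real integrals *)

(* Coquelicot states its integration lemmas over an arbitrary normed module; their
   instances at [R] are needed for [rewrite] and [apply] to see real-valued integrands. *)
Lemma ex_RInt_Chasles_1_R (f : R -> R) a b c : a <= b <= c -> ex_RInt f a c -> ex_RInt f a b.
Proof. intros H1 H2. exact (@ex_RInt_Chasles_1 R_CompleteNormedModule f a b c H1 H2). Qed.
Lemma ex_RInt_Chasles_2_R (f : R -> R) a b c : a <= b <= c -> ex_RInt f a c -> ex_RInt f b c.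
Proof. intros H1 H2. exact (@ex_RInt_Chasles_2 R_CompleteNormedModule f a b c H1 H2). Qed.
Lemma RInt_Chasles_R f a b c : ex_RInt f a b -> ex_RInt f b c -> RInt f a b + RInt f b c = RInt f a c.
Proof. intros H1 H2. exact (RInt_Chasles f a b c H1 H2). Qed.
Lemma RInt_correct_R (f : R -> R) a b : ex_RInt f a b -> is_RInt f a b (RInt f a b).
Proof. intros H. exact (@RInt_correct R_CompleteNormedModule f a b H). Qed.
Lemma ex_RInt_continuous_R (f : R -> R) a b : (forall z, Rmin a b <= z <= Rmax a b -> continuous f z) -> ex_RInt f a b.
Proof. intros H. exact (@ex_RInt_continuous R_CompleteNormedModule f a b H). Qed.
Lemma RInt_point_R (f : R -> R) a : RInt f a a = 0.
Proof. exact (@RInt_point R_CompleteNormedModule a f). Qed.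
Lemma RInt_scal_R f a b l : ex_RInt f a b -> RInt (fun y => l * f y) a b = l * RInt f a b.
Proof. intros H. exact (RInt_scal f a b l H). Qed.
Lemma ex_RInt_scal_R f a b l : ex_RInt f a b -> ex_RInt (fun y => l * f y) a b.
Proof. intros H. exact (ex_RInt_scal f a b l H). Qed.
Lemma RInt_comp_lin_R f u v a b : ex_RInt f (u*a+v) (u*b+v) ->
  RInt (fun y => u * f (u*y+v)) a b = RInt f (u*a+v) (u*b+v).
Proof. intros H. exact (RInt_comp_lin f u v a b H). Qed.
Lemma RInt_const_R a b c : RInt (fun _ => c) a b = (b - a) * c.
Proof. exact (RInt_const a b c). Qed.

Lemma ex_RInt_ext_le f g a b : a <= b -> (forall x, a < x < b -> f x = g x) ->
  ex_RInt f a b -> ex_RInt g a b.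
Proof.
  intros Hab H. apply ex_RInt_ext. intros x Hx.
  rewrite Rmin_left, Rmax_right in Hx by lra. auto.
Qed.

Lemma RInt_ext_le f g a b : a <= b -> (forall x, a < x < b -> f x = g x) ->
  RInt f a b = RInt g a b.
Proof.
  intros Hab H. apply RInt_ext. intros x Hx.
  rewrite Rmin_left, Rmax_right in Hx by lra. auto.
Qed.

(* [RInt] returns in the carrier of a normed module; [ring] needs the equation at [R]. *)
Ltac eq_at_R := match goal with |- @eq _ ?x ?y => change (@eq R x y) end.

(** * Limits at [+oo] and at [0+] *)

Lemma is_lim_pinfty_ub F l B M : is_lim_pinfty F l -> (forall x, M < x -> F x <= B) -> l <= B.
Proof.
  intros H HB. destruct (Rle_dec l B) as [|Hn]; auto. exfalso.
  destruct (H (l - B)) as [M1 H1]. lra. set (x := Rmax M M1 + 1).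
  pose proof (Rmax_l M M1). pose proof (Rmax_r M M1).
  specialize (H1 x ltac:(unfold x; lra)). specialize (HB x ltac:(unfold x; lra)).
  apply Rabs_lt_between in H1. lra.
Qed.

Lemma is_lim_pinfty_lb F l B M : is_lim_pinfty F l -> (forall x, M < x -> B <= F x) -> B <= l.
Proof.
  intros H HB. destruct (Rle_dec B l) as [|Hn]; auto. exfalso.
  destruct (H (B - l)) as [M1 H1]. lra. set (x := Rmax M M1 + 1).
  pose proof (Rmax_l M M1). pose proof (Rmax_r M M1).
  specialize (H1 x ltac:(unfold x; lra)). specialize (HB x ltac:(unfold x; lra)).
  apply Rabs_lt_between in H1. lra.
Qed.

Lemma is_lim_right_ub F a l B d : 0 < d -> is_lim_right F a l -> (forall x, a < x < a + d -> F x <= B) -> l <= B.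
Proof.
  intros Hd H HB. destruct (Rle_dec l B) as [|Hn]; auto. exfalso.
  destruct (H (l - B)) as [d1 [Hd1 H1]]. lra. set (x := a + Rmin d d1 / 2).
  pose proof (Rmin_l d d1). pose proof (Rmin_r d d1). assert (0 < Rmin d d1) by (apply Rmin_pos; lra).
  specialize (H1 x ltac:(unfold x; lra)). specialize (HB x ltac:(unfold x; lra)).
  apply Rabs_lt_between in H1. lra.
Qed.

Lemma is_lim_right_lb F a l B d : 0 < d -> is_lim_right F a l -> (forall x, a < x < a + d -> B <= F x) -> B <= l.
Proof.
  intros Hd H HB. destruct (Rle_dec B l) as [|Hn]; auto. exfalso.
  destruct (H (B - l)) as [d1 [Hd1 H1]]. lra. set (x := a + Rmin d d1 / 2).
  pose proof (Rmin_l d d1). pose proof (Rmin_r d d1). assert (0 < Rmin d d1) by (apply Rmin_pos; lra).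
  specialize (H1 x ltac:(unfold x; lra)). specialize (HB x ltac:(unfold x; lra)).
  apply Rabs_lt_between in H1. lra.
Qed.

Lemma is_lim_pinfty_unique F l1 l2 : is_lim_pinfty F l1 -> is_lim_pinfty F l2 -> l1 = l2.
Proof.
  assert (Hle : forall l l', is_lim_pinfty F l -> is_lim_pinfty F l' -> l <= l').
  { intros l l' H H'. apply le_epsilon. intros e He. destruct (H' e He) as [M HM].
    apply (is_lim_pinfty_ub F l _ M H). intros x Hx.
    specialize (HM x Hx). apply Rabs_lt_between in HM. lra. }
  intros H1 H2. apply Rle_antisym; auto.
Qed.

Lemma is_lim_right_unique F a l1 l2 : is_lim_right F a l1 -> is_lim_right F a l2 -> l1 = l2.
Proof.
  assert (Hle : forall l l', is_lim_right F a l -> is_lim_right F a l' -> l <= l').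
  { intros l l' H H'. apply le_epsilon. intros e He. destruct (H' e He) as [d [Hd Hx]].
    apply (is_lim_right_ub F a l _ d Hd H). intros x Hx'.
    specialize (Hx x Hx'). apply Rabs_lt_between in Hx. lra. }
  intros H1 H2. apply Rle_antisym; auto.
Qed.

Lemma lim_pinfty_eq F l : is_lim_pinfty F l -> lim_pinfty F = l.
Proof.
  intros H. unfold lim_pinfty. apply (is_lim_pinfty_unique F); auto. apply epsilon_spec. exists l; exact H.
Qed.

Lemma lim_right_eq F l : is_lim_right F 0 l -> lim_right F 0 = l.
Proof.
  intros H. unfold lim_right. apply (is_lim_right_unique F 0); auto. apply epsilon_spec. exists l; exact H.
Qed.

Lemma is_lim_pinfty_ext_loc F G l M : (forall x, M < x -> F x = G x) -> is_lim_pinfty F l -> is_lim_pinfty G l.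
Proof.
  intros HFG H e He. destruct (H e He) as [M1 H1]. exists (Rmax M M1). intros x Hx.
  pose proof (Rmax_l M M1). pose proof (Rmax_r M M1). rewrite <- HFG by lra. apply H1. lra.
Qed.

Lemma is_lim_right_ext_loc F G a l : (forall x, a < x -> F x = G x) -> is_lim_right F a l -> is_lim_right G a l.
Proof.
  intros HFG H e He. destruct (H e He) as [d [Hd H1]]. exists d. split. lra. intros x Hx.
  rewrite <- HFG by lra. apply H1. lra.
Qed.

Lemma is_lim_pinfty_plus F G l m : is_lim_pinfty F l -> is_lim_pinfty G m ->
  is_lim_pinfty (fun x => F x + G x) (l + m).
Proof.
  intros H1 H2 e He. destruct (H1 (e/2)) as [M1 A]. lra. destruct (H2 (e/2)) as [M2 B]. lra.
  exists (Rmax M1 M2). intros x Hx. pose proof (Rmax_l M1 M2). pose proof (Rmax_r M1 M2).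
  specialize (A x ltac:(lra)). specialize (B x ltac:(lra)).
  apply Rabs_lt_between in A. apply Rabs_lt_between in B. apply Rabs_lt_between. lra.
Qed.

Lemma is_lim_right_plus F G a l m : is_lim_right F a l -> is_lim_right G a m ->
  is_lim_right (fun x => F x + G x) a (l + m).
Proof.
  intros H1 H2 e He. destruct (H1 (e/2)) as [d1 [Hd1 A]]. lra. destruct (H2 (e/2)) as [d2 [Hd2 B]]. lra.
  exists (Rmin d1 d2). split. apply Rmin_pos; lra. intros x Hx.
  pose proof (Rmin_l d1 d2). pose proof (Rmin_r d1 d2).
  specialize (A x ltac:(lra)). specialize (B x ltac:(lra)).
  apply Rabs_lt_between in A. apply Rabs_lt_between in B. apply Rabs_lt_between. lra.
Qed.

Lemma ex_lim_pinfty_monotone F c B : (forall x y, c <= x -> x <= y -> F x <= F y) -> (forall x, c <= x -> F x <= B) ->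
  exists l, is_lim_pinfty F l.
Proof.
  intros Hm HB. set (E := fun r => exists x, c <= x /\ r = F x).
  destruct (completeness E) as [l [Hub Hlub]].
  exists B. intros r [x [Hx ->]]. apply HB; auto.
  exists (F c). exists c. split; auto; lra.
  exists l. intros e He. destruct (classic (exists x, c <= x /\ l - e < F x)) as [[x0 [Hx0 Hl]]|Hn].
  - exists x0. intros x Hx. assert (F x <= l) by (apply Hub; exists x; split; auto; lra).
    assert (F x0 <= F x) by (apply Hm; lra). apply Rabs_lt_between. lra.
  - exfalso. assert (l <= l - e). apply Hlub. intros r [x [Hx ->]].
    destruct (Rle_dec (F x) (l - e)); auto. exfalso. apply Hn. exists x. split; auto; lra. lra.
Qed.

Lemma ex_lim_right0_antitone F B : (forall x y, 0 < x -> x <= y -> F y <= F x) -> (forall x, 0 < x -> F x <= B) ->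
  exists l, is_lim_right F 0 l.
Proof.
  intros Hm HB. set (E := fun r => exists x, 0 < x /\ r = F x).
  destruct (completeness E) as [l [Hub Hlub]].
  exists B. intros r [x [Hx ->]]. apply HB; auto.
  exists (F 1). exists 1. split; auto; lra.
  exists l. intros e He. destruct (classic (exists x, 0 < x /\ l - e < F x)) as [[x0 [Hx0 Hl]]|Hn].
  - exists x0. split; auto. intros x Hx. assert (F x <= l) by (apply Hub; exists x; split; auto; lra).
    assert (F x0 <= F x) by (apply Hm; lra). apply Rabs_lt_between. lra.
  - exfalso. assert (l <= l - e). apply Hlub. intros r [x [Hx ->]].
    destruct (Rle_dec (F x) (l - e)); auto. exfalso. apply Hn. exists x. split; auto; lra. lra.
Qed.

(* [Defs.RInt], the Riemann integral of the statement, is shadowed by Coquelicot's [RInt]. *)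
Lemma Defs_RInt_eq f a b : ex_RInt f a b -> Defs.RInt f a b = RInt f a b.
Proof.
  intros H. unfold Defs.RInt.
  assert (Hr := ex_RInt_Reals_0 _ _ _ H).
  destruct (epsilon_spec (inhabits 0) (fun v => exists pr : Riemann_integrable f a b, RiemannInt pr = v)) as [pr Hp].
  exists (RiemannInt Hr). exists Hr. reflexivity.
  rewrite <- Hp. symmetry. apply RInt_Reals.
Qed.

Lemma RInt_le_subinterval g a b a' b' : a' <= a -> a <= b -> b <= b' ->
  ex_RInt g a' b' -> (forall x, a' < x < b' -> 0 <= g x) -> RInt g a b <= RInt g a' b'.
Proof.
  intros H1 H2 H3 Hex Hpos.
  assert (E1 : ex_RInt g a' a) by (apply ex_RInt_Chasles_1_R with b'; [lra|auto]).
  assert (E2 : ex_RInt g a b') by (apply ex_RInt_Chasles_2_R with a'; [lra|auto]).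
  assert (E3 : ex_RInt g a b) by (apply ex_RInt_Chasles_1_R with b'; [lra|auto]).
  assert (E4 : ex_RInt g b b') by (apply ex_RInt_Chasles_2_R with a; [lra|auto]).
  rewrite <- (RInt_Chasles_R g a' a b') by auto. rewrite <- (RInt_Chasles_R g a b b') by auto.
  assert (0 <= RInt g a' a) by (apply RInt_ge_0; auto; intros; apply Hpos; lra).
  assert (0 <= RInt g b b') by (apply RInt_ge_0; auto; intros; apply Hpos; lra).
  lra.
Qed.

(** * Improper integrals over [(0, oo)] *)

(* [ImpInt0inf] picks its value by choice; [is_ImpInt g v] asserts that the two limits
   defining it exist, with value [v]. *)
Definition is_ImpInt (g : R -> R) (v : R) : Prop :=
  (forall a b, 0 < a -> a <= b -> ex_RInt g a b) /\
  exists P : R -> R, (forall a, 0 < a -> is_lim_pinfty (fun b => RInt g a b) (P a)) /\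
    is_lim_right P 0 v.

Lemma ImpInt0inf_eq g v : is_ImpInt g v -> ImpInt0inf g = v.
Proof.
  intros [Hex [P [HP Hv]]]. unfold ImpInt0inf. apply lim_right_eq.
  apply is_lim_right_ext_loc with P. 2: exact Hv.
  intros a Ha. symmetry. apply lim_pinfty_eq.
  apply is_lim_pinfty_ext_loc with (fun b => RInt g a b) a. 2: apply HP; lra.
  intros b Hb. symmetry. apply Defs_RInt_eq. apply Hex; lra.
Qed.

Lemma RInt_ext_but_point g (g' : R -> R) a b z : a <= b ->
  (forall x, a < x < b -> x <> z -> g x = g' x) -> ex_RInt g a b ->
  ex_RInt g' a b /\ RInt g' a b = RInt g a b.
Proof.
  intros Hab Hgg Hex.
  destruct (Rlt_dec a z) as [Haz|Haz]; [destruct (Rlt_dec z b) as [Hzb|Hzb]|].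
  - assert (E1 : ex_RInt g a z) by (apply ex_RInt_Chasles_1_R with b; [lra|exact Hex]).
    assert (E2 : ex_RInt g z b) by (apply ex_RInt_Chasles_2_R with a; [lra|exact Hex]).
    assert (F1 : ex_RInt g' a z) by (apply (ex_RInt_ext_le g); auto; [lra|intros; apply Hgg; lra]).
    assert (F2 : ex_RInt g' z b) by (apply (ex_RInt_ext_le g); auto; [lra|intros; apply Hgg; lra]).
    split. apply ex_RInt_Chasles with z; auto.
    rewrite <- (RInt_Chasles_R g' a z b), <- (RInt_Chasles_R g a z b) by auto.
    f_equal; apply RInt_ext_le; try lra; intros; symmetry; apply Hgg; lra.
  - split; [apply (ex_RInt_ext_le g)|symmetry; apply RInt_ext_le]; auto; intros; apply Hgg; lra.
  - split; [apply (ex_RInt_ext_le g)|symmetry; apply RInt_ext_le]; auto; intros; apply Hgg; lra.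
Qed.

Lemma RInt_ext_but_finite Xs : forall g (g' : R -> R) a b, a <= b ->
  (forall x, a < x < b -> ~ In x Xs -> g x = g' x) -> ex_RInt g a b ->
  ex_RInt g' a b /\ RInt g' a b = RInt g a b.
Proof.
  induction Xs as [|z Xs IH]; intros g g' a b Hab Hgg Hex.
  - split; [apply (ex_RInt_ext_le g)|symmetry; apply RInt_ext_le]; auto; intros; apply Hgg; auto.
  - set (g'' := fun x => if Req_EM_T x z then g x else g' x).
    destruct (IH g g'' a b Hab) as [E1 I1]; auto.
    { intros x Hx Hn. unfold g''. destruct (Req_EM_T x z). reflexivity. apply Hgg; auto.
      intros [|]; auto. }
    destruct (RInt_ext_but_point g'' g' a b z Hab) as [E2 I2]; auto.
    { intros x Hx Hxz. unfold g''. destruct (Req_EM_T x z). congruence. reflexivity. }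
    split; congruence.
Qed.

Lemma is_ImpInt_ext_but_finite g (g' : R -> R) v Xs : (forall x, 0 < x -> ~ In x Xs -> g x = g' x) ->
  is_ImpInt g v -> is_ImpInt g' v.
Proof.
  intros Hgg [Hex [P [HP Hv]]]. split.
  - intros a b Ha Hab. apply (RInt_ext_but_finite Xs g g' a b Hab). intros; apply Hgg; auto; lra.
    apply Hex; auto.
  - exists P. split; auto. intros a Ha.
    apply is_lim_pinfty_ext_loc with (fun b => RInt g a b) a. 2: apply HP; auto.
    intros b Hb. symmetry. apply (RInt_ext_but_finite Xs g g' a b). lra.
    intros; apply Hgg; auto; lra. apply Hex; lra.
Qed.

Lemma is_ImpInt_plus (g1 g2 : R -> R) v1 v2 : is_ImpInt g1 v1 -> is_ImpInt g2 v2 ->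
  is_ImpInt (fun x => g1 x + g2 x) (v1 + v2).
Proof.
  intros [E1 [P1 [H1 L1]]] [E2 [P2 [H2 L2]]]. split.
  - intros a b Ha Hab. apply (ex_RInt_plus g1 g2); auto.
  - exists (fun a => P1 a + P2 a). split. 2: apply is_lim_right_plus; auto.
    intros a Ha. apply is_lim_pinfty_ext_loc with (fun b => RInt g1 a b + RInt g2 a b) a.
    intros b Hb. symmetry. exact (RInt_plus g1 g2 a b (E1 a b Ha ltac:(lra)) (E2 a b Ha ltac:(lra))).
    apply is_lim_pinfty_plus; auto.
Qed.

Lemma is_ImpInt_0 : is_ImpInt (fun _ => 0) 0.
Proof.
  split. intros; apply (ex_RInt_const a b 0).
  exists (fun _ => 0). split.
  intros a Ha e He. exists 0. intros x Hx.
  rewrite (RInt_const a x 0). unfold scal; simpl; unfold mult; simpl.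
  rewrite Rmult_0_r, Rminus_0_r, Rabs_R0. lra.
  intros e He. exists 1. split. lra. intros. rewrite Rminus_0_r, Rabs_R0. lra.
Qed.

Lemma is_ImpInt_ub g v B : is_ImpInt g v -> (forall a b, 0 < a -> a <= b -> RInt g a b <= B) -> v <= B.
Proof.
  intros [Hex [P [HP Hv]]] HB. apply (is_lim_right_ub P 0 v B 1). lra. auto.
  intros a Ha. apply (is_lim_pinfty_ub _ _ B a (HP a ltac:(lra))). intros; apply HB; lra.
Qed.

Lemma RInt_le_is_ImpInt g v : is_ImpInt g v -> (forall x, 0 < x -> 0 <= g x) ->
  forall a b, 0 < a -> a <= b -> RInt g a b <= v.
Proof.
  intros [Hex [P [HP Hv]]] Hpos a b Ha Hab.
  apply (is_lim_right_lb P 0 v _ a). lra. auto. intros a' Ha'.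
  apply (is_lim_pinfty_lb _ _ _ b (HP a' ltac:(lra))). intros b' Hb'.
  apply RInt_le_subinterval; try lra. apply Hex; lra. intros; apply Hpos; lra.
Qed.

Lemma is_ImpInt_ge0 g v : is_ImpInt g v -> (forall x, 0 < x -> 0 <= g x) -> 0 <= v.
Proof.
  intros H Hp. apply Rle_trans with (RInt g 1 1). rewrite RInt_point. right; reflexivity.
  apply (RInt_le_is_ImpInt g v H Hp); lra.
Qed.

Lemma ex_is_ImpInt_nonneg_bounded g B : (forall x, 0 < x -> 0 <= g x) ->
  (forall a b, 0 < a -> a <= b -> ex_RInt g a b) ->
  (forall a b, 0 < a -> a <= b -> RInt g a b <= B) -> exists v, is_ImpInt g v.
Proof.
  intros Hpos Hex HB.
  assert (HP : forall a, 0 < a -> exists l, is_lim_pinfty (fun b => RInt g a b) l).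
  { intros a Ha. apply (ex_lim_pinfty_monotone _ a B). intros x y Hx Hxy.
    apply RInt_le_subinterval; try lra. apply Hex; lra. intros; apply Hpos; lra.
    intros; apply HB; lra. }
  set (P := fun a => epsilon (inhabits 0) (fun l => is_lim_pinfty (fun b => RInt g a b) l)).
  assert (HP' : forall a, 0 < a -> is_lim_pinfty (fun b => RInt g a b) (P a)).
  { intros a Ha. unfold P. apply epsilon_spec. auto. }
  destruct (ex_lim_right0_antitone P B) as [v Hv].
  - intros x y Hx Hxy. apply (is_lim_pinfty_ub _ _ _ y (HP' y ltac:(lra))). intros b Hb.
    apply (is_lim_pinfty_lb _ _ _ b (HP' x ltac:(lra))). intros b' Hb'.
    apply RInt_le_subinterval; try lra. apply Hex; lra. intros; apply Hpos; lra.
  - intros x Hx. apply (is_lim_pinfty_ub _ _ _ x (HP' x Hx)). intros; apply HB; lra.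
  - exists v. split; auto. exists P. split; auto.
Qed.

Lemma continuous_eps h c : continuous h c -> forall e, 0 < e -> exists dl, 0 < dl /\
  forall u, Rabs (u - c) < dl -> Rabs (h u - h c) < e.
Proof.
  intros H e He. unfold continuous in H. rewrite filterlim_locally in H.
  destruct (H (mkposreal e He)) as [dl Hd]. exists dl. split. apply cond_pos.
  intros u Hu. apply Hd. exact Hu.
Qed.

Lemma RInt_small_near f c : (forall z, continuous f z) -> forall e, 0 < e -> exists dl, 0 < dl /\
  forall u, Rabs (u - c) < dl -> Rabs (RInt f c u) < e.
Proof.
  intros Hc e He.
  assert (Hcont : continuous (fun z => RInt f c z) c).
  { apply (continuous_RInt_1 f c c). apply filter_forall. intros z.
    apply RInt_correct_R. apply ex_RInt_continuous_R. intros; apply Hc. }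
  destruct (continuous_eps _ _ Hcont e He) as [dl [Hd H]]. exists dl. split; auto.
  intros u Hu. specialize (H u Hu). rewrite RInt_point_R, Rminus_0_r in H. exact H.
Qed.

Lemma RInt_ext_0 g a b : a <= b -> (forall x, a < x < b -> g x = 0) ->
  ex_RInt g a b /\ RInt g a b = 0.
Proof.
  intros Hab H. split.
  - apply (ex_RInt_ext_le (fun _ => 0)); auto. intros; symmetry; auto. apply ex_RInt_const.
  - rewrite (RInt_ext_le g (fun _ => 0)) by auto. rewrite RInt_const_R. eq_at_R. ring.
Qed.

Lemma clamp_interval a b a0 b0 : a <= b -> a0 <= b0 -> exists p1 p2, a <= p1 <= p2 /\ p2 <= b /\
  (forall x, a < x < p1 -> x < a0) /\ (forall x, p2 < x < b -> b0 < x) /\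
  (p1 < p2 -> a0 <= p1 /\ p2 <= b0).
Proof.
  intros Hab H0. destruct (Rle_dec b a0).
  - exists b, b. repeat split; try lra; intros; lra.
  - destruct (Rle_dec b0 a).
    + exists a, a. repeat split; try lra; intros; lra.
    + exists (Rmax a a0), (Rmin b b0). unfold Rmax, Rmin.
      destruct (Rle_dec a a0); destruct (Rle_dec b b0); repeat split; try lra; intros; lra.
Qed.

(* [[p1, p2]] is [[a, b]] clamped to [[a0, b0]]. *)
Lemma RInt_clamp G E a0 b0 : a0 <= b0 ->
  (forall x, a0 < x < b0 -> G x = E x) ->
  (forall x, 0 < x -> (x < a0 \/ b0 < x) -> G x = 0) ->
  (forall x, a0 <= x <= b0 -> 0 < x -> continuous E x) ->
  forall a b, 0 < a -> a <= b -> exists p1 p2, a <= p1 <= p2 /\ p2 <= b /\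
    (p1 < p2 -> a0 <= p1 /\ p2 <= b0) /\
    ex_RInt G a b /\ RInt G a b = RInt E p1 p2.
Proof.
  intros H0 HGE HG0 HEc a b Ha Hab.
  destruct (clamp_interval a b a0 b0 Hab H0) as [p1 [p2 [Hp1 [Hp2 [Hl [Hr Hm]]]]]].
  exists p1, p2. do 3 (split; auto).
  destruct (RInt_ext_0 G a p1) as [E1 I1]. lra. intros x Hx. apply HG0. lra. left; apply Hl; lra.
  destruct (RInt_ext_0 G p2 b) as [E3 I3]. lra. intros x Hx. apply HG0. lra. right; apply Hr; lra.
  destruct (Req_dec p1 p2) as [<-|Hne].
  - rewrite RInt_point_R. split. apply ex_RInt_Chasles with p1; auto.
    rewrite <- (RInt_Chasles_R G a p1 b) by auto. rewrite I1, I3. eq_at_R. ring.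
  - destruct (Hm ltac:(lra)) as [Ha0 Hb0].
    assert (E2 : ex_RInt E p1 p2).
    { apply ex_RInt_continuous_R. intros z Hz. rewrite Rmin_left, Rmax_right in Hz by lra.
      apply HEc; lra. }
    assert (E2' : ex_RInt G p1 p2).
    { apply (ex_RInt_ext_le E); auto; [lra|]. intros; symmetry; apply HGE; lra. }
    assert (I2 : RInt G p1 p2 = RInt E p1 p2) by (apply RInt_ext_le; [lra|]; intros; apply HGE; lra).
    assert (E23 : ex_RInt G p1 b) by (apply ex_RInt_Chasles with p2; auto).
    split. apply ex_RInt_Chasles with p1; auto.
    rewrite <- (RInt_Chasles_R G a p1 b), <- (RInt_Chasles_R G p1 p2 b) by auto.
    rewrite I1, I2, I3. eq_at_R. ring.
Qed.

Definition cutoff E a0 b0 x := if Rle_dec a0 x then (if Rle_dec x b0 then E x else 0) else 0.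
Definition cutoff_ray E a0 x := if Rle_dec a0 x then E x else 0.

Lemma RInt_clamp_ray E a0 : (forall x, a0 <= x -> 0 < x -> continuous E x) ->
  forall a b, 0 < a -> a <= b -> exists p1 p2, a <= p1 <= p2 /\ p2 <= b /\
    (p1 < p2 -> a0 <= p1) /\
    ex_RInt (cutoff_ray E a0) a b /\ RInt (cutoff_ray E a0) a b = RInt E p1 p2.
Proof.
  intros HEc a b Ha Hab. set (b1 := Rmax a0 b + 1). pose proof (Rmax_l a0 b); pose proof (Rmax_r a0 b).
  destruct (RInt_clamp (cutoff E a0 b1) E a0 b1) with (a := a) (b := b)
    as [p1 [p2 [Hp1 [Hp2 [Hm [Ex Hr]]]]]]; auto.
  - unfold b1; lra.
  - intros x Hx. unfold cutoff. destruct (Rle_dec a0 x); [destruct (Rle_dec x b1)|]; lra.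
  - intros x Hx Ho. unfold cutoff. destruct (Rle_dec a0 x); [destruct (Rle_dec x b1)|]; auto; lra.
  - intros x Hx Hx0. apply HEc; lra.
  - assert (Heq : forall x, a < x < b -> cutoff E a0 b1 x = cutoff_ray E a0 x).
    { intros x Hx. unfold cutoff, cutoff_ray.
      destruct (Rle_dec a0 x); [destruct (Rle_dec x b1)|]; auto. unfold b1 in *; lra. }
    exists p1, p2. do 2 (split; [lra|]). split. intros Hlt; apply (proj1 (Hm Hlt)). split.
    + apply (ex_RInt_ext_le (cutoff E a0 b1)); auto.
    + rewrite <- Hr. symmetry. apply RInt_ext_le; auto.
Qed.

Lemma is_ImpInt_box G E a0 b0 B : a0 <= b0 -> 0 <= B ->
  (forall x, a0 < x < b0 -> G x = E x) ->
  (forall x, 0 < x -> (x < a0 \/ b0 < x) -> G x = 0) ->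
  (forall x, a0 <= x <= b0 -> 0 < x -> continuous E x) ->
  (forall x, a0 <= x <= b0 -> 0 < x -> 0 <= E x) ->
  (forall u w, a0 <= u -> u <= w -> w <= b0 -> 0 < u -> RInt E u w <= B) ->
  exists v, is_ImpInt G v /\ 0 <= v /\ v <= B /\
    (forall u w, a0 <= u -> u <= w -> w <= b0 -> 0 < u -> RInt E u w <= v).
Proof.
  intros H0 HB0 HGE HG0 HEc HEp HB.
  set (G' := cutoff E a0 b0).
  assert (HGE' : forall x, a0 < x < b0 -> G' x = E x).
  { intros x Hx. unfold G', cutoff. destruct (Rle_dec a0 x); [destruct (Rle_dec x b0)|]; lra. }
  assert (HG0' : forall x, 0 < x -> (x < a0 \/ b0 < x) -> G' x = 0).
  { intros x Hx Ho. unfold G', cutoff. destruct (Rle_dec a0 x); [destruct (Rle_dec x b0)|]; auto; lra. }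
  assert (Hpos : forall x, 0 < x -> 0 <= G' x).
  { intros x Hx. unfold G', cutoff. destruct (Rle_dec a0 x); [destruct (Rle_dec x b0)|]; try lra.
    apply HEp; lra. }
  assert (Hloc := RInt_clamp G' E a0 b0 H0 HGE' HG0' HEc).
  assert (HBd : forall a b, 0 < a -> a <= b -> RInt G' a b <= B).
  { intros a b Ha Hab. destruct (Hloc a b Ha Hab) as [p1 [p2 [Hp1 [Hp2 [Hm [Ex ->]]]]]].
    destruct (Req_dec p1 p2). subst. rewrite RInt_point_R. auto.
    destruct (Hm ltac:(lra)). apply HB; lra. }
  assert (Hex : forall a b, 0 < a -> a <= b -> ex_RInt G' a b).
  { intros a b Ha Hab. destruct (Hloc a b Ha Hab) as [p1 [p2 [_ [_ [_ [Ex _]]]]]]. exact Ex. }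
  destruct (ex_is_ImpInt_nonneg_bounded G' B Hpos Hex HBd) as [v Hv].
  exists v. split; [|split; [|split]].
  - apply is_ImpInt_ext_but_finite with G' (a0 :: b0 :: nil); auto.
    intros x Hx Hn. assert (x <> a0) by (intros ->; apply Hn; left; auto).
    assert (x <> b0) by (intros ->; apply Hn; right; left; auto).
    destruct (Rlt_dec x a0). rewrite HG0, HG0'; auto.
    destruct (Rlt_dec b0 x). rewrite HG0, HG0'; auto. rewrite HGE, HGE'; auto; lra.
  - apply (is_ImpInt_ge0 G'); auto.
  - apply (is_ImpInt_ub G'); auto.
  - intros u w Hu Huw Hw Hu0. rewrite (RInt_ext_le E G') by (auto; intros; symmetry; apply HGE'; lra).
    apply (RInt_le_is_ImpInt G' v Hv Hpos); lra.
Qed.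

Lemma is_ImpInt_ray G E a0 B : 0 <= B ->
  (forall x, a0 < x -> G x = E x) ->
  (forall x, 0 < x -> x < a0 -> G x = 0) ->
  (forall x, a0 <= x -> 0 < x -> continuous E x) ->
  (forall x, a0 <= x -> 0 < x -> 0 <= E x) ->
  (forall u w, a0 <= u -> u <= w -> 0 < u -> RInt E u w <= B) ->
  exists v, is_ImpInt G v /\ 0 <= v /\ v <= B /\
    (forall u w, a0 <= u -> u <= w -> 0 < u -> RInt E u w <= v).
Proof.
  intros HB0 HGE HG0 HEc HEp HB.
  set (G' := cutoff_ray E a0).
  assert (Hpos : forall x, 0 < x -> 0 <= G' x).
  { intros x Hx. unfold G', cutoff_ray. destruct (Rle_dec a0 x); try lra. apply HEp; lra. }
  assert (Hloc := RInt_clamp_ray E a0 HEc). fold G' in Hloc.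
  assert (HBd : forall a b, 0 < a -> a <= b -> RInt G' a b <= B).
  { intros a b Ha Hab. destruct (Hloc a b Ha Hab) as [p1 [p2 [Hp1 [Hp2 [Hm [Ex ->]]]]]].
    destruct (Req_dec p1 p2). subst. rewrite RInt_point_R. auto.
    assert (a0 <= p1) by (apply Hm; lra). apply HB; lra. }
  assert (Hex : forall a b, 0 < a -> a <= b -> ex_RInt G' a b).
  { intros a b Ha Hab. destruct (Hloc a b Ha Hab) as [p1 [p2 [_ [_ [_ [Ex _]]]]]]. exact Ex. }
  destruct (ex_is_ImpInt_nonneg_bounded G' B Hpos Hex HBd) as [v Hv].
  exists v. split; [|split; [|split]].
  - apply is_ImpInt_ext_but_finite with G' (a0 :: nil); auto.
    intros x Hx Hn. assert (x <> a0) by (intros ->; apply Hn; left; auto).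
    unfold G', cutoff_ray. destruct (Rle_dec a0 x). rewrite HGE; auto; lra. rewrite HG0; auto; lra.
  - apply (is_ImpInt_ge0 G'); auto.
  - apply (is_ImpInt_ub G'); auto.
  - intros u w Hu Huw Hu0. rewrite (RInt_ext_le E G').
    + apply (RInt_le_is_ImpInt G' v Hv Hpos); lra.
    + lra.
    + intros x Hx. unfold G', cutoff_ray. destruct (Rle_dec a0 x); auto; lra.
Qed.

Lemma is_ImpInt_box_RInt g f c d : 0 <= c -> c <= d ->
  (forall z, continuous f z) -> (forall y, 0 <= f y) ->
  (forall y, c < y < d -> g y = f y) ->
  (forall y, 0 < y -> (y < c \/ d < y) -> g y = 0) ->
  is_ImpInt g (RInt f c d).
Proof.
  intros Hc Hcd Hf Hfp HgE Hg0.
  assert (Hex : forall u w, ex_RInt f u w) by (intros; apply ex_RInt_continuous_R; auto).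
  assert (HB : 0 <= RInt f c d) by (apply RInt_ge_0; auto).
  destruct (is_ImpInt_box g f c d (RInt f c d) Hcd HB HgE Hg0) as [v [Hv [Hv0 [HvB Hlow]]]].
  - intros; apply Hf.
  - intros; apply Hfp.
  - intros u w Hu Huw Hw Hu0. apply RInt_le_subinterval; auto.
  - replace (RInt f c d) with v; auto. apply Rle_antisym; auto.
    (* [v] dominates the integral over [[u, d]] for every [u > c]; let [u] tend to [c]. *)
    apply Rnot_lt_le. intros Hlt.
    destruct (RInt_small_near f c Hf (RInt f c d - v)) as [dl [Hdl Hs]]. lra.
    destruct (Req_dec c d) as [<-|Hne]. rewrite RInt_point_R in Hlt. lra.
    set (u := Rmin (c + dl/2) ((c + d)/2)).
    assert (c < u) by (unfold u; apply Rmin_glb_lt; lra).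
    assert (u <= (c+d)/2) by (unfold u; apply Rmin_r).
    assert (u <= c + dl/2) by (unfold u; apply Rmin_l).
    assert (Hlu := Hlow u d ltac:(lra) ltac:(lra) ltac:(lra) ltac:(lra)).
    specialize (Hs u ltac:(rewrite Rabs_right; lra)).
    rewrite <- (RInt_Chasles_R f c u d) in Hlt, Hs by auto.
    apply Rabs_lt_between in Hs. lra.
Qed.

Lemma is_ImpInt_ray_lim g f c Iinf : 0 <= c ->
  (forall z, continuous f z) -> (forall y, 0 <= f y) ->
  is_lim_pinfty (fun b => RInt f c b) Iinf ->
  (forall y, c < y -> g y = f y) ->
  (forall y, 0 < y -> y < c -> g y = 0) ->
  is_ImpInt g Iinf.
Proof.
  intros Hc Hf Hfp HI HgE Hg0.
  assert (Hex : forall u w, ex_RInt f u w) by (intros; apply ex_RInt_continuous_R; auto).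
  assert (Hup : forall b, c <= b -> RInt f c b <= Iinf).
  { intros b Hb. apply (is_lim_pinfty_lb _ _ _ b HI). intros b' Hb'.
    apply RInt_le_subinterval; auto; lra. }
  assert (HB : 0 <= Iinf).
  { apply Rle_trans with (RInt f c c). rewrite RInt_point_R; lra. apply Hup; lra. }
  destruct (is_ImpInt_ray g f c Iinf HB HgE Hg0) as [v [Hv [Hv0 [HvB Hlow]]]].
  - intros; apply Hf.
  - intros; apply Hfp.
  - intros u w Hu Huw Hu0. apply Rle_trans with (RInt f c w).
    apply RInt_le_subinterval; auto; lra. apply Hup; lra.
  - replace Iinf with v; auto. apply Rle_antisym; auto.
    (* As above, with [w -> oo] as well. *)
    apply Rnot_lt_le. intros Hlt.
    destruct (RInt_small_near f c Hf ((Iinf - v)/2)) as [dl [Hdl Hs]]. lra.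
    destruct (HI ((Iinf - v)/2)) as [M1 HM]. lra.
    set (u := c + dl/2). set (w := Rmax (u + 1) (M1 + 1)).
    pose proof (Rmax_l (u+1) (M1+1)). pose proof (Rmax_r (u+1) (M1+1)).
    assert (Hlu := Hlow u w ltac:(unfold u; lra) ltac:(unfold w; lra) ltac:(unfold u; lra)).
    specialize (Hs u ltac:(unfold u; rewrite Rabs_right; lra)).
    specialize (HM w ltac:(unfold w; lra)).
    rewrite <- (RInt_Chasles_R f c u w) in HM by auto.
    apply Rabs_lt_between in Hs. apply Rabs_lt_between in HM. lra.
Qed.

(* Iterated improper integral over [(0, oo)^2]; the inner integral only has to exist for all
   but finitely many [x], which the outer integral does not see. *)
Definition is_ImpInt2 (g : R -> R -> R) v := exists (Gx : R -> R) (Xs : list R),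
  (forall x, 0 < x -> ~ In x Xs -> is_ImpInt (g x) (Gx x)) /\ is_ImpInt Gx v.

Lemma ImpInt2_eq (g : R -> R -> R) v : is_ImpInt2 g v -> ImpInt0inf (fun x => ImpInt0inf (g x)) = v.
Proof.
  intros [Gx [Xs [H1 H2]]]. apply ImpInt0inf_eq. apply is_ImpInt_ext_but_finite with Gx Xs; auto.
  intros x Hx Hn. symmetry. apply ImpInt0inf_eq. auto.
Qed.

Lemma Int2_eq S (f2 : R -> R -> R) v : is_ImpInt2 (fun x y => Defs.ind S x y * f2 x y) v -> Int2 S f2 = v.
Proof. intros H. unfold Int2. apply (ImpInt2_eq _ v H). Qed.

Lemma is_ImpInt2_plus (g1 g2 : R -> R -> R) v1 v2 : is_ImpInt2 g1 v1 -> is_ImpInt2 g2 v2 ->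
  is_ImpInt2 (fun x y => g1 x y + g2 x y) (v1 + v2).
Proof.
  intros [G1 [X1 [A1 B1]]] [G2 [X2 [A2 B2]]]. exists (fun x => G1 x + G2 x), (X1 ++ X2).
  split. intros x Hx Hn. apply is_ImpInt_plus. apply A1; auto. intros Hi; apply Hn; apply in_or_app; auto.
  apply A2; auto. intros Hi; apply Hn; apply in_or_app; auto.
  apply is_ImpInt_plus; auto.
Qed.

Lemma is_ImpInt2_0 : is_ImpInt2 (fun _ _ => 0) 0.
Proof. exists (fun _ => 0), nil. split. intros; apply is_ImpInt_0. apply is_ImpInt_0. Qed.

Lemma is_ImpInt2_ext_but_finite (g g' : R -> R -> R) v Xs Ys :
  (forall x y, 0 < x -> 0 < y -> ~ In x Xs -> ~ In y Ys -> g x y = g' x y) ->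
  is_ImpInt2 g v -> is_ImpInt2 g' v.
Proof.
  intros Hgg [Gx [X1 [A B]]]. exists Gx, (X1 ++ Xs). split; auto.
  intros x Hx Hn. apply is_ImpInt_ext_but_finite with (g x) Ys.
  intros y Hy Hny. apply Hgg; auto. intros Hi; apply Hn; apply in_or_app; auto.
  apply A; auto. intros Hi; apply Hn; apply in_or_app; auto.
Qed.

(** * The kernel [K_s] *)

Lemma continuous_Rpower p t : 0 < t -> continuous (fun t => Rpower t p) t.
Proof.
  intros Ht. apply ex_derive_continuous_R. unfold Rpower. auto_derive. exact Ht.
Qed.

Lemma RInt_derive_R f (df : R -> R) a b : a <= b -> (forall x, a <= x <= b -> is_derive f x (df x)) ->
  (forall x, a <= x <= b -> continuous df x) -> ex_RInt df a b /\ RInt df a b = f b - f a.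
Proof.
  intros Hab Hd Hc.
  assert (H : is_RInt df a b (minus (f b) (f a))).
  { apply (@is_RInt_derive R_CompleteNormedModule); intros x Hx; rewrite Rmin_left in Hx by lra; rewrite Rmax_right in Hx by lra; auto. }
  split. exists (minus (f b) (f a)); exact H. exact (@is_RInt_unique R_CompleteNormedModule df a b _ H).
Qed.

Lemma RInt_inv_1_plus_sqr a b : a <= b -> ex_RInt (fun t => / (1 + t^2)) a b /\
  RInt (fun t => / (1 + t^2)) a b = atan b - atan a.
Proof.
  intros Hab. apply (RInt_derive_R atan). auto.
  intros x _. apply is_derive_Reals. apply derivable_pt_lim_atan.
  intros x _. apply ex_derive_continuous_R. auto_derive. nra.
Qed.

Lemma RInt_Rpower a b p : 0 < a -> a <= b -> p <> 0 ->
  ex_RInt (fun t => Rpower t (p - 1)) a b /\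
  RInt (fun t => Rpower t (p - 1)) a b = (Rpower b p - Rpower a p) / p.
Proof.
  intros Ha Hab Hp.
  destruct (RInt_derive_R (fun t => Rpower t p / p) (fun t => Rpower t (p - 1)) a b Hab) as [HE HR].
  - intros x Hx. apply is_derive_Reals.
    replace (Rpower x (p - 1)) with ((p * Rpower x (p - 1)) * / p) by (field; auto).
    apply (derivable_pt_lim_scal_right (fun y => Rpower y p)). apply derivable_pt_lim_power. lra.
  - intros x Hx. apply continuous_Rpower. lra.
  - split; auto. rewrite HR. eq_at_R. field. auto.
Qed.

Lemma RInt_t_exp_neg a b : a <= b -> ex_RInt (fun t => t * exp (- t)) a b /\
  RInt (fun t => t * exp (- t)) a b = (a + 1) * exp (- a) - (b + 1) * exp (- b).
Proof.
  intros Hab.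
  destruct (RInt_derive_R (fun t => - ((t + 1) * exp (- t))) (fun t => t * exp (- t)) a b Hab) as [HE HR].
  - intros x Hx. auto_derive. auto. ring.
  - intros x Hx. apply ex_derive_continuous_R. auto_derive. auto.
  - split; auto. rewrite HR. eq_at_R. ring.
Qed.

Definition kern s t := xipow s 1 t.
Definition Kern s u := RInt (kern s) 0 u.

Lemma xipow_Rpower s x y : 0 < x * x + y * y -> xipow s x y = Rpower (x * x + y * y) (- s / 2).
Proof.
  intros H. unfold xipow. rewrite <- Rpower_sqrt by auto. rewrite Rpower_mult. f_equal. field.
Qed.

Lemma xipow_exp s x y : 0 < x * x + y * y -> xipow s x y = exp (- s / 2 * ln (x * x + y * y)).
Proof. intros H. rewrite xipow_Rpower by auto. reflexivity. Qed.

Lemma xipow_pos s x y : 0 < xipow s x y.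
Proof. unfold xipow, Rpower. apply exp_pos. Qed.

Lemma kern_pos s t : 0 < kern s t.
Proof. apply xipow_pos. Qed.

Lemma kern_Rpower s t : kern s t = Rpower (1 + t * t) (- s / 2).
Proof. unfold kern. rewrite xipow_Rpower. f_equal; ring. nra. Qed.

Lemma xipow_continuous s x : 0 < x -> forall y, continuous (xipow s x) y.
Proof.
  intros Hx y. apply continuous_ext with (fun y => exp (- s / 2 * ln (x * x + y * y))).
  intros z. symmetry. apply xipow_exp. nra.
  apply ex_derive_continuous_R. auto_derive. nra.
Qed.

Lemma kern_continuous s t : continuous (kern s) t.
Proof. apply xipow_continuous. lra. Qed.

Lemma ex_RInt_kern s a b : ex_RInt (kern s) a b.
Proof. apply ex_RInt_continuous_R. intros; apply kern_continuous. Qed.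

Lemma Kern_derive s u : is_derive (Kern s) u (kern s u).
Proof.
  apply (@is_derive_RInt R_NormedModule (kern s) (Kern s) 0 u). apply filter_forall. intros z. apply RInt_correct_R. apply ex_RInt_kern.
  apply kern_continuous.
Qed.

Lemma xipow_homogeneous s x y : 0 < x -> xipow s x y = Rpower x (- s) * kern s (y / x).
Proof.
  intros Hx. rewrite kern_Rpower. rewrite xipow_Rpower by nra.
  replace (x * x + y * y) with (x * (x * (1 + y / x * (y / x)))) by (field; lra).
  unfold Rpower. rewrite ln_mult by (try apply Rmult_lt_0_compat; auto; nra).
  rewrite ln_mult by (auto; nra). rewrite <- exp_plus. f_equal. field.
Qed.

Lemma RInt_xipow s x c d : 0 < x ->
  ex_RInt (xipow s x) c d /\
  RInt (xipow s x) c d = Rpower x (1 - s) * (Kern s (d / x) - Kern s (c / x)).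
Proof.
  intros Hx. split. apply ex_RInt_continuous_R. intros; apply xipow_continuous; auto.
  assert (Ek : ex_RInt (fun y => kern s (/ x * y + 0)) c d).
  { apply ex_RInt_continuous_R. intros z _. apply continuous_comp.
    apply ex_derive_continuous_R. auto_derive. auto. apply kern_continuous. }
  rewrite (RInt_ext _ (fun y => Rpower x (- s) * (x * (/ x * kern s (/ x * y + 0))))).
  2: { intros y _. rewrite xipow_homogeneous by auto.
       replace (/ x * y + 0) with (y / x) by (field; lra). eq_at_R. field. lra. }
  rewrite RInt_scal_R by (do 2 apply ex_RInt_scal_R; exact Ek).
  rewrite RInt_scal_R by (apply ex_RInt_scal_R; exact Ek).
  rewrite RInt_comp_lin_R by apply ex_RInt_kern.
  replace (/ x * c + 0) with (c / x) by (field; lra). replace (/ x * d + 0) with (d / x) by (field; lra).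
  unfold Kern. rewrite <- (RInt_Chasles_R (kern s) 0 (c / x) (d / x)) by apply ex_RInt_kern.
  replace (1 - s) with (- s + 1) by ring. rewrite Rpower_plus, Rpower_1 by auto. eq_at_R. ring.
Qed.

Lemma Rinv_Rpower z : 0 < z -> / z = Rpower z (-1).
Proof. intros Hz. replace (-1) with (- (1)) by ring. rewrite Rpower_Ropp, Rpower_1; auto. Qed.

Lemma kern_ge_inv s t : 0 <= s <= 2 -> / (1 + t^2) <= kern s t.
Proof.
  intros Hs. rewrite kern_Rpower. replace (t^2) with (t*t) by ring. rewrite Rinv_Rpower by nra.
  apply Rle_Rpower. nra. lra.
Qed.

Lemma kern_le_inv s t : 2 <= s -> kern s t <= / (1 + t^2).
Proof.
  intros Hs. rewrite kern_Rpower. replace (t^2) with (t*t) by ring. rewrite Rinv_Rpower by nra.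
  apply Rle_Rpower. nra. lra.
Qed.

Lemma kern_le_inv_scaled s t T : 0 <= s <= 2 -> t * t <= T * T ->
  kern s t <= Rpower (1 + T * T) (1 - s / 2) * / (1 + t^2).
Proof.
  intros Hs HT. rewrite kern_Rpower. replace (t^2) with (t*t) by ring. rewrite Rinv_Rpower by nra.
  replace (- s / 2) with (1 - s / 2 + -1) by field. rewrite Rpower_plus.
  apply Rmult_le_compat_r. left; apply Rpower_gt0.
  apply Rle_Rpower_l. lra. nra.
Qed.

Lemma Rpower_mult_self t q : 0 < t -> Rpower (t * t) q = Rpower t (2 * q).
Proof. intros Ht. unfold Rpower. rewrite ln_mult by auto. f_equal. ring. Qed.

Lemma kern_le_Rpower s t : 0 <= s -> 0 < t -> kern s t <= Rpower t (- s).
Proof.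
  intros Hs Ht. rewrite kern_Rpower.
  assert (Rpower t (- s) = Rpower (t * t) (- s / 2)) as ->.
  { rewrite Rpower_mult_self by auto. f_equal. field. }
  replace (- s / 2) with (- (s / 2)) by field.
  rewrite !Rpower_Ropp. apply Rinv_le_contravar. apply Rpower_gt0.
  apply Rle_Rpower_l. lra. nra.
Qed.

Lemma Kern_ge0 s u : 0 <= u -> 0 <= Kern s u.
Proof. intros Hu. apply RInt_ge_0; auto. apply ex_RInt_kern. intros; left; apply kern_pos. Qed.

Lemma Kern_le s u w : 0 <= u -> u <= w -> Kern s u <= Kern s w.
Proof.
  intros Hu Huw. unfold Kern. apply RInt_le_subinterval; try lra. apply ex_RInt_kern. intros; left; apply kern_pos.
Qed.

Lemma atan_le_Kern s u : 0 <= s <= 2 -> 0 <= u -> atan u <= Kern s u.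
Proof.
  intros Hs Hu. destruct (RInt_inv_1_plus_sqr 0 u Hu) as [E HR]. rewrite atan_0, Rminus_0_r in HR.
  rewrite <- HR. apply RInt_le; auto. apply ex_RInt_kern. intros; apply kern_ge_inv; auto.
Qed.

Lemma Kern_le_atan s u : 2 <= s -> 0 <= u -> Kern s u <= atan u.
Proof.
  intros Hs Hu. destruct (RInt_inv_1_plus_sqr 0 u Hu) as [E HR]. rewrite atan_0, Rminus_0_r in HR.
  rewrite <- HR. apply RInt_le; auto. apply ex_RInt_kern. intros; apply kern_le_inv; auto.
Qed.

Lemma atan_le_PI2 u : atan u <= PI / 2.
Proof. pose proof (atan_bound u). lra. Qed.

Lemma Kern_sub_le s T u : 1 < s -> 0 < T -> T <= u ->
  Kern s u - Kern s T <= Rpower T (1 - s) / (s - 1).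
Proof.
  intros Hs HT Hu. unfold Kern.
  rewrite <- (RInt_Chasles_R (kern s) 0 T u) by apply ex_RInt_kern.
  destruct (RInt_Rpower T u (1 - s)) as [Ex HR]; try lra.
  assert (RInt (kern s) T u <= (Rpower u (1 - s) - Rpower T (1 - s)) / (1 - s)).
  { rewrite <- HR. apply RInt_le; try lra. apply ex_RInt_kern. auto.
    intros t Ht. replace (1 - s - 1) with (- s) by ring. apply kern_le_Rpower; lra. }
  assert (0 < Rpower u (1 - s) / (s - 1)) by (apply Rdiv_lt_0_compat; [apply Rpower_gt0|lra]).
  replace ((Rpower u (1 - s) - Rpower T (1 - s)) / (1 - s)) with
    (Rpower T (1 - s) / (s - 1) - Rpower u (1 - s) / (s - 1)) in H by (field; lra).
  lra.
Qed.

Definition Kern_ub s T := Rpower (1 + T * T) (1 - s / 2) * (PI / 2) + 2 * Rpower T (- / 2).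

(* On [[0, T]] the kernel is at most [(1 + T^2)^(1 - s/2)] times [/ (1 + t^2)], whose
   integral is below [PI / 2]; beyond [T] it is below [t^(-s)]. *)
Lemma Kern_le_ub s u T : 3/2 <= s <= 2 -> 1 <= T -> 0 <= u -> Kern s u <= Kern_ub s T.
Proof.
  intros Hs HT Hu. unfold Kern_ub. set (c := Rpower (1 + T * T) (1 - s / 2)).
  assert (Hc : 0 < c) by apply Rpower_gt0.
  assert (Hr : 0 < Rpower T (- / 2)) by apply Rpower_gt0.
  assert (Hfirst : forall w, 0 <= w <= T -> Kern s w <= c * (PI / 2)).
  { intros w Hw. destruct (RInt_inv_1_plus_sqr 0 w ltac:(lra)) as [E HR].
    rewrite atan_0, Rminus_0_r in HR.
    apply Rle_trans with (RInt (fun t => c * / (1 + t^2)) 0 w).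
    - apply RInt_le; try lra. apply ex_RInt_kern. apply ex_RInt_scal_R; auto.
      intros t Ht. apply kern_le_inv_scaled. lra. nra.
    - rewrite RInt_scal_R, HR by auto. apply Rmult_le_compat_l. lra. apply atan_le_PI2. }
  destruct (Rle_dec u T).
  - specialize (Hfirst u ltac:(lra)). lra.
  - specialize (Hfirst T ltac:(lra)).
    assert (Htail := Kern_sub_le s T u ltac:(lra) ltac:(lra) ltac:(lra)).
    assert (Rpower T (1 - s) <= Rpower T (- / 2)) by (apply Rle_Rpower; lra).
    assert (/ (s - 1) <= 2) by (replace 2 with (/ / 2) by field; apply Rinv_le_contravar; lra).
    assert (Rpower T (1 - s) / (s - 1) <= Rpower T (- / 2) * 2).
    { apply Rmult_le_compat; try lra. left; apply Rpower_gt0.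
      left; apply Rinv_0_lt_compat; lra. }
    lra.
Qed.

Lemma ex_lim_Kern s : 2 <= s -> exists K, is_lim_pinfty (Kern s) K /\ 0 <= K <= PI / 2.
Proof.
  intros Hs. destruct (ex_lim_pinfty_monotone (Kern s) 0 (PI / 2)) as [K HK].
  - intros; apply Kern_le; lra.
  - intros x Hx. apply Rle_trans with (atan x). apply Kern_le_atan; auto. apply atan_le_PI2.
  - exists K. split; auto. split.
    + apply (is_lim_pinfty_lb _ _ _ 0 HK). intros; apply Kern_ge0; lra.
    + apply (is_lim_pinfty_ub _ _ _ 0 HK). intros. apply Rle_trans with (atan x).
      apply Kern_le_atan; auto; lra. apply atan_le_PI2.
Qed.

Lemma Kern_le_lim s K u : 0 <= u -> is_lim_pinfty (Kern s) K -> Kern s u <= K.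
Proof.
  intros Hu HK. apply (is_lim_pinfty_lb _ _ _ u HK). intros; apply Kern_le; lra.
Qed.

Lemma Kern_tail s K u : 1 < s -> 0 < u -> is_lim_pinfty (Kern s) K ->
  K - Kern s u <= Rpower u (1 - s) / (s - 1).
Proof.
  intros Hs Hu HK. cut (K <= Kern s u + Rpower u (1 - s) / (s - 1)). lra.
  apply (is_lim_pinfty_ub _ _ _ u HK). intros b Hb.
  pose proof (Kern_sub_le s u b Hs Hu ltac:(lra)). lra.
Qed.

Lemma is_lim_pinfty_RInt_xipow s x c K : 0 < x -> is_lim_pinfty (Kern s) K ->
  is_lim_pinfty (fun b => RInt (xipow s x) c b) (Rpower x (1 - s) * (K - Kern s (c / x))).
Proof.
  intros Hx HK e He.
  set (p := Rpower x (1 - s)). assert (Hp : 0 < p) by apply Rpower_gt0.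
  destruct (HK (e / p)) as [M1 HM]. apply Rdiv_lt_0_compat; auto.
  exists (Rmax 0 (M1 * x)). intros b Hb. pose proof (Rmax_l 0 (M1 * x)). pose proof (Rmax_r 0 (M1*x)).
  destruct (RInt_xipow s x c b Hx) as [_ ->]. fold p.
  assert (Hb' : M1 < b / x).
  { apply Rmult_lt_reg_r with x; auto. unfold Rdiv; rewrite Rmult_assoc, Rinv_l, Rmult_1_r; lra. }
  specialize (HM (b / x) Hb').
  replace (p * (Kern s (b / x) - Kern s (c / x)) - p * (K - Kern s (c / x)))
    with (p * (Kern s (b/x) - K)) by ring.
  rewrite Rabs_mult, Rabs_right by lra.
  apply Rlt_le_trans with (p * (e / p)). apply Rmult_lt_compat_l; auto. right; field; lra.
Qed.

(** * Integrals over rectangles and strips *)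

Lemma ind_iff (S S' : R -> R -> Prop) x y : (S x y <-> S' x y) -> Defs.ind S x y = Defs.ind S' x y.
Proof.
  intros H. unfold Defs.ind. destruct (excluded_middle_informative (S x y));
  destruct (excluded_middle_informative (S' x y)); tauto.
Qed.

Lemma ind_true (S : R -> R -> Prop) x y : S x y -> Defs.ind S x y = 1.
Proof. intros H. unfold Defs.ind. destruct (excluded_middle_informative (S x y)); tauto. Qed.
Lemma ind_false (S : R -> R -> Prop) x y : ~ S x y -> Defs.ind S x y = 0.
Proof. intros H. unfold Defs.ind. destruct (excluded_middle_informative (S x y)); tauto. Qed.

Lemma is_ImpInt_ind_empty (S : R -> R -> Prop) (f : R -> R -> R) x :
  (forall y, 0 < y -> ~ S x y) -> is_ImpInt (fun y => Defs.ind S x y * f x y) 0.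
Proof.
  intros H. apply is_ImpInt_ext_but_finite with (fun _ => 0) nil.
  - intros y Hy _. rewrite ind_false by auto. ring.
  - apply is_ImpInt_0.
Qed.

Lemma Int2_set_ext (S S' : R -> R -> Prop) (f2 : R -> R -> R) :
  (forall x y, S x y <-> S' x y) -> Int2 S f2 = Int2 S' f2.
Proof.
  intros H. unfold Int2. f_equal. extensionality x. f_equal. extensionality y.
  rewrite (ind_iff S S' x y (H x y)). reflexivity.
Qed.

Definition rect a0 b0 c d : R -> R -> Prop := fun x y => a0 <= x <= b0 /\ c <= y <= d.
Definition slice s c d x := RInt (xipow s x) c d.

Lemma slice_eq s c d x : 0 < x -> slice s c d x = Rpower x (1 - s) * (Kern s (d / x) - Kern s (c / x)).
Proof. intros Hx. unfold slice. apply (RInt_xipow s x c d Hx). Qed.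

Lemma slice_continuous s c d x : 0 < x -> continuous (slice s c d) x.
Proof.
  intros Hx. apply continuous_ext_loc with (fun y => Rpower y (1 - s) * (Kern s (d / y) - Kern s (c / y))).
  exists (mkposreal x Hx). intros y Hy. apply ball_R_between in Hy. simpl in Hy. symmetry. apply slice_eq. lra.
  apply ex_derive_continuous_R. unfold Rpower. auto_derive. repeat split; try lra; eexists; apply Kern_derive.
Qed.

Lemma slice_ge0 s c d x : 0 < x -> c <= d -> 0 <= slice s c d x.
Proof.
  intros Hx Hcd. unfold slice. apply RInt_ge_0; auto. apply ex_RInt_continuous_R. intros.
  apply xipow_continuous; auto. intros; left; apply xipow_pos.
Qed.

Lemma is_ImpInt_rect_slice s a0 b0 c d x : 0 <= c -> c <= d -> 0 < x ->
  is_ImpInt (fun y => Defs.ind (rect a0 b0 c d) x y * xipow s x y) (cutoff (slice s c d) a0 b0 x).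
Proof.
  intros Hc Hcd Hx. unfold cutoff.
  destruct (Rle_dec a0 x); [destruct (Rle_dec x b0)|].
  - apply is_ImpInt_box_RInt; auto. apply xipow_continuous; auto. intros; left; apply xipow_pos.
    intros y Hy. rewrite ind_true. ring. split; lra.
    intros y Hy Ho. rewrite ind_false. ring. intros [_ H]; lra.
  - apply is_ImpInt_ind_empty. intros y _ [H _]; lra.
  - apply is_ImpInt_ind_empty. intros y _ [H _]; lra.
Qed.

Lemma is_ImpInt2_rect s a0 b0 c d B : 0 <= a0 -> a0 <= b0 -> 0 <= c -> c <= d -> 0 <= B ->
  (forall u w, a0 <= u -> u <= w -> w <= b0 -> 0 < u -> RInt (slice s c d) u w <= B) ->
  exists v, is_ImpInt2 (fun x y => Defs.ind (rect a0 b0 c d) x y * xipow s x y) v /\ 0 <= v /\ v <= B /\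
    (forall u w, a0 <= u -> u <= w -> w <= b0 -> 0 < u -> RInt (slice s c d) u w <= v).
Proof.
  intros Ha0 Hab Hc Hcd HB HBd.
  destruct (is_ImpInt_box (cutoff (slice s c d) a0 b0) (slice s c d) a0 b0 B Hab HB) as [v [Hv [Hv0 [HvB Hl]]]].
  - intros x Hx. unfold cutoff. destruct (Rle_dec a0 x); [destruct (Rle_dec x b0)|]; auto; lra.
  - intros x Hx Ho. unfold cutoff. destruct (Rle_dec a0 x); [destruct (Rle_dec x b0)|]; auto; lra.
  - intros; apply slice_continuous; auto.
  - intros; apply slice_ge0; auto.
  - auto.
  - exists v. split; auto. exists (cutoff (slice s c d) a0 b0), nil. split; auto.
    intros x Hx _. apply is_ImpInt_rect_slice; auto.
Qed.

Lemma xipow_le_away s x y h : 0 <= s -> 0 < h -> h <= x \/ h <= Rabs y -> xipow s x y <= Rpower h (- s).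
Proof.
  intros Hs Hh Hxy. unfold xipow.
  assert (Hq : h <= sqrt (x * x + y * y)).
  { rewrite <- (sqrt_square h) by lra. apply sqrt_le_1. nra. nra.
    destruct Hxy. nra. assert (y * y = Rabs y * Rabs y) by (rewrite <- Rabs_mult; rewrite Rabs_right; nra). nra. }
  rewrite !Rpower_Ropp. apply Rinv_le_contravar. apply Rpower_gt0.
  apply Rle_Rpower_l; lra.
Qed.

Lemma is_ImpInt2_rect_away s a0 b0 c d h : 0 <= s -> 0 < h -> 0 <= a0 -> a0 <= b0 -> 0 <= c -> c <= d ->
  (h <= a0 \/ h <= c) ->
  exists v, is_ImpInt2 (fun x y => Defs.ind (rect a0 b0 c d) x y * xipow s x y) v /\ 0 <= v /\
    v <= (b0 - a0) * ((d - c) * Rpower h (- s)).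
Proof.
  intros Hs Hh Ha0 Hab Hc Hcd Haw.
  assert (Hp : 0 < Rpower h (- s)) by apply Rpower_gt0.
  assert (HE : forall x, a0 <= x <= b0 -> 0 < x -> slice s c d x <= (d - c) * Rpower h (- s)).
  { intros x Hx Hx0. unfold slice. rewrite <- RInt_const_R. apply RInt_le; auto.
    apply ex_RInt_continuous_R. intros; apply xipow_continuous; auto. apply ex_RInt_const.
    intros y Hy. apply xipow_le_away; auto. destruct Haw. left; lra. right; rewrite Rabs_right; lra. }
  destruct (is_ImpInt2_rect s a0 b0 c d ((b0 - a0) * ((d - c) * Rpower h (- s)))) as [v [Hv [Hv0 [HvB _]]]]; auto.
  apply Rmult_le_pos; try lra. apply Rmult_le_pos; lra.
  intros u w Hu Huw Hw Hu0. apply Rle_trans with (RInt (fun _ => (d - c) * Rpower h (- s)) u w).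
  apply RInt_le; auto. apply ex_RInt_continuous_R. intros. apply slice_continuous.
  rewrite Rmin_left in H by lra; lra. apply ex_RInt_const.
  intros x Hx. apply HE; lra. rewrite RInt_const_R. apply Rmult_le_compat_r.
  apply Rmult_le_pos; lra. lra.
  exists v; auto.
Qed.

Lemma is_ImpInt2_unique (g : R -> R -> R) v1 v2 : is_ImpInt2 g v1 -> is_ImpInt2 g v2 -> v1 = v2.
Proof. intros H1 H2. rewrite <- (ImpInt2_eq g v1 H1), <- (ImpInt2_eq g v2 H2). reflexivity. Qed.

Lemma Kern_0 s : Kern s 0 = 0.
Proof. apply RInt_point_R. Qed.

Lemma slice_corner s h x : 0 < x -> slice s 0 h x = Rpower x (1 - s) * Kern s (h / x).
Proof.
  intros Hx. rewrite slice_eq by auto. replace (0 / x) with 0 by (field; lra).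
  rewrite Kern_0. eq_at_R. ring.
Qed.

Lemma RInt_slice_corner_le s h T u w : 3/2 <= s < 2 -> 0 < h -> 1 <= T ->
  0 < u -> u <= w -> w <= h ->
  RInt (slice s 0 h) u w <= Kern_ub s T * Rpower h (2 - s) / (2 - s).
Proof.
  intros Hs Hh HT Hu Huw Hw.
  destruct (RInt_Rpower u w (2 - s)) as [Ex HR]; try lra.
  apply Rle_trans with (RInt (fun x => Kern_ub s T * Rpower x (2 - s - 1)) u w).
  - apply RInt_le; auto.
    + apply ex_RInt_continuous_R. intros z Hz. rewrite Rmin_left in Hz by lra.
      apply slice_continuous; lra.
    + apply ex_RInt_scal_R; auto.
    + intros x Hx. rewrite slice_corner by lra. replace (2 - s - 1) with (1 - s) by ring.
      rewrite Rmult_comm. apply Rmult_le_compat_r. left; apply Rpower_gt0.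
      apply Kern_le_ub; try lra. apply Rlt_le, Rdiv_lt_0_compat; lra.
  - rewrite RInt_scal_R, HR by auto.
    assert (0 <= Kern_ub s T).
    { unfold Kern_ub. pose proof (Rpower_gt0 (1 + T * T) (1 - s / 2)).
      pose proof (Rpower_gt0 T (- / 2)). pose proof PI_RGT_0. nra. }
    assert (Rpower w (2 - s) <= Rpower h (2 - s)) by (apply Rle_Rpower_l; lra).
    pose proof (Rpower_gt0 u (2 - s)).
    unfold Rdiv. rewrite <- !Rmult_assoc. apply Rmult_le_compat_r.
    left; apply Rinv_0_lt_compat; lra. apply Rmult_le_compat_l; lra.
Qed.

(* For [x <= dl] the slice is at least [x^(1-s) atan (h / dl)], since [atan <= Kern s]. *)
Lemma RInt_slice_corner_ge s h u dl : 3/2 <= s < 2 -> 0 < h ->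
  0 < u -> u <= dl -> dl <= h ->
  atan (h / dl) * (Rpower dl (2 - s) - Rpower u (2 - s)) / (2 - s) <= RInt (slice s 0 h) u dl.
Proof.
  intros Hs Hh Hu Hud Hdh.
  destruct (RInt_Rpower u dl (2 - s)) as [Ex HR]; try lra.
  apply Rle_trans with (RInt (fun x => atan (h / dl) * Rpower x (2 - s - 1)) u dl).
  - rewrite RInt_scal_R, HR by auto. right; field; lra.
  - apply RInt_le; auto.
    + apply ex_RInt_scal_R; auto.
    + apply ex_RInt_continuous_R. intros z Hz. rewrite Rmin_left in Hz by lra.
      apply slice_continuous; lra.
    + intros x Hx. rewrite slice_corner by lra. replace (2 - s - 1) with (1 - s) by ring.
      rewrite Rmult_comm. apply Rmult_le_compat_l. left; apply Rpower_gt0.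
      apply Rle_trans with (atan (h / x)).
      * destruct (Req_dec x dl) as [->|]. lra. left. apply atan_increasing.
        unfold Rdiv. apply Rmult_lt_compat_l. lra. apply Rinv_lt_contravar; nra.
      * apply atan_le_Kern. lra. apply Rlt_le, Rdiv_lt_0_compat; lra.
Qed.

Lemma is_ImpInt2_corner_bounds s h : 3/2 <= s < 2 -> 0 < h ->
  exists v, is_ImpInt2 (fun x y => Defs.ind (rect 0 h 0 h) x y * xipow s x y) v /\
   (forall T, 1 <= T -> v <= Kern_ub s T * Rpower h (2 - s) / (2 - s)) /\
   (forall u dl, 0 < u -> u <= dl -> dl <= h ->
      atan (h / dl) * (Rpower dl (2 - s) - Rpower u (2 - s)) / (2 - s) <= v).
Proof.
  intros Hs Hh.
  assert (Hrect : forall T, 1 <= T -> exists v,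
    is_ImpInt2 (fun x y => Defs.ind (rect 0 h 0 h) x y * xipow s x y) v /\
    v <= Kern_ub s T * Rpower h (2 - s) / (2 - s) /\
    (forall u w, 0 <= u -> u <= w -> w <= h -> 0 < u -> RInt (slice s 0 h) u w <= v)).
  { intros T HT. destruct (is_ImpInt2_rect s 0 h 0 h (Kern_ub s T * Rpower h (2 - s) / (2 - s)))
      as [v [Hv [_ [HvB Hlow]]]]; try lra.
    - pose proof (RInt_slice_corner_le s h T h h Hs Hh HT Hh). rewrite RInt_point_R in H. lra.
    - intros; apply RInt_slice_corner_le; auto; lra.
    - exists v. auto. }
  destruct (Hrect 1 ltac:(lra)) as [v [Hv [_ Hlow]]].
  exists v. split; [|split]; auto.
  - intros T HT. destruct (Hrect T HT) as [v' [Hv' [HvB' _]]].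
    rewrite (is_ImpInt2_unique _ _ _ Hv Hv'). auto.
  - intros u dl Hu Hud Hdh. apply Rle_trans with (RInt (slice s 0 h) u dl).
    apply RInt_slice_corner_ge; auto. apply Hlow; lra.
Qed.

Definition strip_top L : R -> R -> Prop := fun x y => 0 <= x <= L /\ L <= y.
Definition strip_right L : R -> R -> Prop := fun x y => L <= x /\ 0 <= y.

Lemma tail_slice_bounds s L K x : 2 <= s -> 0 < L -> 0 < x -> is_lim_pinfty (Kern s) K ->
  0 <= Rpower x (1 - s) * (K - Kern s (L / x)) <= Rpower L (1 - s) / (s - 1).
Proof.
  intros Hs HL Hx HK. assert (0 < L / x) by (apply Rdiv_lt_0_compat; lra).
  pose proof (Rpower_gt0 x (1 - s)). split.
  - apply Rmult_le_pos. lra. assert (Kern s (L / x) <= K) by (apply Kern_le_lim; auto; lra). lra.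
  - apply Rle_trans with (Rpower x (1 - s) * (Rpower (L / x) (1 - s) / (s - 1))).
    + apply Rmult_le_compat_l. lra. apply Kern_tail; auto; lra.
    + unfold Rdiv at 1. rewrite <- Rmult_assoc, Rpower_mult_distr by auto.
      replace (x * (L / x)) with L by (field; lra). lra.
Qed.

Lemma is_ImpInt2_strip_top s L K : 2 <= s -> 0 < L -> is_lim_pinfty (Kern s) K ->
  exists v, is_ImpInt2 (fun x y => Defs.ind (strip_top L) x y * xipow s x y) v /\ 0 <= v /\
    v <= L * (Rpower L (1 - s) / (s - 1)).
Proof.
  intros Hs HL HK.
  set (E1 := fun x => Rpower x (1 - s) * (K - Kern s (L / x))).
  set (C := Rpower L (1 - s) / (s - 1)).
  assert (HE1c : forall x, 0 < x -> continuous E1 x).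
  { intros x Hx. unfold E1. apply ex_derive_continuous_R. unfold Rpower. auto_derive.
    repeat split; try lra; eexists; apply Kern_derive. }
  assert (HE1 : forall x, 0 < x -> 0 <= E1 x <= C) by (intros; apply tail_slice_bounds; auto).
  assert (HC : 0 <= C) by (destruct (HE1 1); lra).
  destruct (is_ImpInt_box (cutoff E1 0 L) E1 0 L (L * C)) as [v [Hv [Hv0 [HvB _]]]]; try lra.
  - apply Rmult_le_pos; lra.
  - intros x Hx. unfold cutoff. destruct (Rle_dec 0 x); [destruct (Rle_dec x L)|]; auto; lra.
  - intros x Hx Ho. unfold cutoff. destruct (Rle_dec 0 x); [destruct (Rle_dec x L)|]; auto; lra.
  - intros; apply HE1c; auto.
  - intros; apply HE1; auto.
  - intros u w Hu Huw Hw Hu0. apply Rle_trans with (RInt (fun _ => C) u w).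
    + apply RInt_le; auto. apply ex_RInt_continuous_R. intros z Hz. rewrite Rmin_left in Hz by lra.
      apply HE1c; lra. apply ex_RInt_const. intros; apply HE1; lra.
    + rewrite RInt_const_R. apply Rmult_le_compat_r; lra.
  - exists v. split; auto. exists (cutoff E1 0 L), nil. split; auto.
    intros x Hx _. unfold cutoff. destruct (Rle_dec 0 x); [destruct (Rle_dec x L)|]; try lra.
    + apply is_ImpInt_ray_lim with (f := xipow s x) (c := L); try lra.
      * apply xipow_continuous; auto.
      * intros; left; apply xipow_pos.
      * unfold E1. apply is_lim_pinfty_RInt_xipow; auto.
      * intros y Hy. rewrite ind_true. ring. split; lra.
      * intros y Hy Hy'. rewrite ind_false. ring. intros [_ H]; lra.
    + apply is_ImpInt_ind_empty. intros y _ [H _]; lra.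
Qed.

Lemma RInt_Rpower_tail_le s L u w : 2 < s -> 0 < L -> L <= u -> u <= w ->
  RInt (fun x => Rpower x (1 - s)) u w <= Rpower L (2 - s) / (s - 2).
Proof.
  intros Hs HL Hu Huw. destruct (RInt_Rpower u w (2 - s)) as [_ HR]; try lra.
  replace (1 - s) with (2 - s - 1) by ring. rewrite HR.
  assert (Hanti : forall p q, 0 < p -> p <= q -> Rpower q (2 - s) <= Rpower p (2 - s)).
  { intros p q Hp Hpq. replace (2 - s) with (- (s - 2)) by ring. rewrite !Rpower_Ropp.
    apply Rinv_le_contravar. apply Rpower_gt0. apply Rle_Rpower_l; lra. }
  pose proof (Hanti L u HL Hu). pose proof (Rpower_gt0 w (2 - s)).
  replace ((Rpower w (2 - s) - Rpower u (2 - s)) / (2 - s)) with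
    ((Rpower u (2 - s) - Rpower w (2 - s)) / (s - 2)) by (field; lra).
  unfold Rdiv. apply Rmult_le_compat_r. left; apply Rinv_0_lt_compat; lra. lra.
Qed.

Lemma is_ImpInt2_strip_right s L K : 3 <= s -> 0 < L -> is_lim_pinfty (Kern s) K -> K <= PI / 2 ->
  exists v, is_ImpInt2 (fun x y => Defs.ind (strip_right L) x y * xipow s x y) v /\ 0 <= v /\
    v <= PI / 2 * (Rpower L (2 - s) / (s - 2)).
Proof.
  intros Hs HL HK HKp.
  assert (HK0 : 0 <= K) by (rewrite <- (Kern_0 s); apply Kern_le_lim; auto; lra).
  set (E2 := fun x => K * Rpower x (1 - s)).
  assert (HC : 0 <= PI / 2 * (Rpower L (2 - s) / (s - 2))).
  { apply Rmult_le_pos. pose proof PI_RGT_0; lra.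
    apply Rlt_le, Rdiv_lt_0_compat; [apply Rpower_gt0|lra]. }
  destruct (is_ImpInt_ray (cutoff_ray E2 L) E2 L _ HC) as [v [Hv [Hv0 [HvB _]]]].
  - intros x Hx. unfold cutoff_ray. destruct (Rle_dec L x); auto; lra.
  - intros x Hx Hx'. unfold cutoff_ray. destruct (Rle_dec L x); auto; lra.
  - intros x _ Hx. unfold E2. apply ex_derive_continuous_R. unfold Rpower. auto_derive. auto.
  - intros x _ Hx. unfold E2. apply Rmult_le_pos; auto. left; apply Rpower_gt0.
  - intros u w Hu Huw Hu0. unfold E2. rewrite RInt_scal_R.
    + apply Rmult_le_compat; auto. apply RInt_ge_0; auto.
      * apply ex_RInt_continuous_R. intros z Hz. rewrite Rmin_left in Hz by lra. apply continuous_Rpower; lra.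
      * intros; left; apply Rpower_gt0.
      * apply RInt_Rpower_tail_le; lra.
    + apply ex_RInt_continuous_R. intros z Hz. rewrite Rmin_left in Hz by lra. apply continuous_Rpower; lra.
  - exists v. split; auto. exists (cutoff_ray E2 L), nil. split; auto.
    intros x Hx _. unfold cutoff_ray. destruct (Rle_dec L x).
    + replace (E2 x) with (Rpower x (1 - s) * (K - Kern s (0 / x))).
      2: { unfold E2. replace (0 / x) with 0 by (field; lra). rewrite Kern_0. ring. }
      apply is_ImpInt_ray_lim with (f := xipow s x) (c := 0); try lra.
      * apply xipow_continuous; auto.
      * intros; left; apply xipow_pos.
      * apply is_lim_pinfty_RInt_xipow; auto.
      * intros y Hy. rewrite ind_true. ring. split; lra.
      * intros y Hy Hy'. lra.
    + apply is_ImpInt_ind_empty. intros y _ [H _]; lra.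
Qed.

(* Up to the lines [x = L] and [y = L], [D_2] is the disjoint union of the two strips. *)
Lemma Int2_D2_bounds s L : 3 <= s -> 0 < L ->
  0 <= Int2 (D2 L) (xipow s) <=
    L * (Rpower L (1 - s) / (s - 1)) + PI / 2 * (Rpower L (2 - s) / (s - 2)).
Proof.
  intros Hs HL. destruct (ex_lim_Kern s) as [K [HK [HK0 HKp]]]. lra.
  destruct (is_ImpInt2_strip_top s L K) as [v1 [H1 [A1 B1]]]; auto; try lra.
  destruct (is_ImpInt2_strip_right s L K) as [v2 [H2 [A2 B2]]]; auto; try lra.
  replace (Int2 (D2 L) (xipow s)) with (v1 + v2). lra.
  symmetry. apply Int2_eq.
  apply is_ImpInt2_ext_but_finite with (fun x y => Defs.ind (strip_top L) x y * xipow s x y +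
     Defs.ind (strip_right L) x y * xipow s x y) (L :: nil) (L :: nil).
  2: apply is_ImpInt2_plus; auto.
  intros x y Hx Hy Hnx Hny.
  assert (x <> L) by (intros ->; apply Hnx; left; auto).
  assert (y <> L) by (intros ->; apply Hny; left; auto).
  assert (Htop : Defs.ind (strip_top L) x y = Defs.ind (fun x y => x < L /\ L < y) x y)
    by (apply ind_iff; unfold strip_top; lra).
  assert (Hright : Defs.ind (strip_right L) x y = Defs.ind (fun x y => L < x) x y)
    by (apply ind_iff; unfold strip_right; lra).
  assert (HD2 : Defs.ind (D2 L) x y = Defs.ind (fun x y => x < L /\ L < y \/ L < x) x y).
  { apply ind_iff. unfold D2, D1.
    destruct (Rlt_dec x L); destruct (Rlt_dec y L); split; intros; try tauto; lra. }
  rewrite Htop, Hright, HD2.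
  destruct (Rlt_dec L x); [rewrite (ind_true (fun x y => L < x)) by auto|
                           rewrite (ind_false (fun x y => L < x)) by auto].
  - rewrite ind_false by lra. rewrite ind_true by auto. ring.
  - destruct (Rlt_dec L y).
    + rewrite !ind_true by (simpl; lra). ring.
    + rewrite !ind_false by (simpl; lra). ring.
Qed.

(** * The sets [T_mn] *)

Definition indP (Q : Prop) : R := if excluded_middle_informative Q then 1 else 0.
Definition b2R (b : bool) : R := if b then 1 else 0.

Lemma indP_iff (Q Q' : Prop) : (Q <-> Q') -> indP Q = indP Q'.
Proof. intros H. unfold indP. destruct (excluded_middle_informative Q); destruct (excluded_middle_informative Q'); tauto. Qed.
Lemma indP_and (Q Q' : Prop) : indP (Q /\ Q') = indP Q * indP Q'.
Proof. unfold indP. destruct (excluded_middle_informative (Q /\ Q')); destruct (excluded_middle_informative Q);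
  destruct (excluded_middle_informative Q'); try ring; tauto. Qed.

Definition in_grid (N : nat) (i : Z) : bool := ((0 <=? i)%Z && (i <? Z.of_nat N)%Z)%bool.

Lemma in_grid_cell N h i : 0 < h -> in_grid N i = true -> 0 <= IZR i * h /\ (IZR i + 1) * h <= INR N * h.
Proof.
  intros Hh H. unfold in_grid in H. apply andb_true_iff in H. destruct H as [H1 H2].
  apply Z.leb_le in H1. apply Z.ltb_lt in H2. apply IZR_le in H1.
  assert (IZR i + 1 <= INR N). { rewrite INR_IZR_INZ. rewrite <- plus_IZR. apply IZR_le. lia. }
  split; nra.
Qed.

Lemma not_in_grid_cell N h i : 0 < h -> in_grid N i = false -> (IZR i + 1) * h <= 0 \/ INR N * h <= IZR i * h.
Proof.
  intros Hh H. unfold in_grid in H. apply andb_false_iff in H. destruct H as [H|H].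
  - apply Z.leb_gt in H. left. assert (IZR i + 1 <= 0). { rewrite <- plus_IZR. apply IZR_le. lia. } nra.
  - apply Z.ltb_ge in H. right. assert (INR N <= IZR i). { rewrite INR_IZR_INZ. apply IZR_le. lia. } nra.
Qed.

Definition slab h (i : Z) x := IZR i * h <= x <= (IZR i + 1) * h.

Lemma indP_two_slabs N h (k : Z) x : 0 < h -> 0 < x -> x <> INR N * h -> x <> IZR k * h ->
  indP ((slab h (k - 1) x \/ slab h k x) /\ 0 < x < INR N * h) =
  b2R (in_grid N (k - 1)) * indP (slab h (k - 1) x) + b2R (in_grid N k) * indP (slab h k x).
Proof.
  intros Hh Hx HL Hk. unfold slab. rewrite minus_IZR.
  assert (V1 := in_grid_cell N h (k - 1) Hh). assert (V2 := not_in_grid_cell N h (k - 1) Hh).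
  assert (V3 := in_grid_cell N h k Hh). assert (V4 := not_in_grid_cell N h k Hh).
  rewrite minus_IZR in V1, V2.
  unfold b2R, indP. destruct (in_grid N (k - 1)); destruct (in_grid N k);
  [specialize (V1 eq_refl); specialize (V3 eq_refl) | specialize (V1 eq_refl); specialize (V4 eq_refl)
  | specialize (V2 eq_refl); specialize (V3 eq_refl) | specialize (V2 eq_refl); specialize (V4 eq_refl)];
  repeat match goal with |- context [excluded_middle_informative ?Q] => destruct (excluded_middle_informative Q) end;
  try ring; exfalso; lra.
Qed.

Lemma gridh_pos L N : 0 < L -> (1 <= N)%nat -> 0 < gridh L N.
Proof. intros HL HN. unfold gridh. apply Rdiv_lt_0_compat; auto. apply lt_0_INR. lia. Qed.

Lemma L_gridh L N : 0 < L -> (1 <= N)%nat -> L = INR N * gridh L N.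
Proof. intros HL HN. unfold gridh. field. apply not_0_INR. lia. Qed.

Lemma in_grid_ge0 N i : in_grid N i = true -> (0 <= i)%Z.
Proof. unfold in_grid. intros H. apply andb_true_iff in H. apply Z.leb_le. tauto. Qed.

Lemma is_ImpInt2_cell L N s (i j : Z) : 0 < L -> (1 <= N)%nat -> 3/2 <= s < 2 ->
  in_grid N i = true -> in_grid N j = true -> (i <> 0 \/ j <> 0)%Z ->
  is_ImpInt2 (fun x y => Defs.ind (cell (gridh L N) i j) x y * xipow s x y) (Int2 (cell (gridh L N) i j) (xipow s)) /\
  0 <= Int2 (cell (gridh L N) i j) (xipow s) <= gridh L N * (gridh L N * Rpower (gridh L N) (- s)).
Proof.
  intros HL HN Hs Hi Hj Hij. set (h := gridh L N). assert (Hh : 0 < h) by (apply gridh_pos; auto).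
  apply in_grid_ge0 in Hi. apply in_grid_ge0 in Hj.
  assert (Hi' : 0 <= IZR i) by (apply IZR_le; auto). assert (Hj' : 0 <= IZR j) by (apply IZR_le; auto).
  assert (Haway : h <= IZR i * h \/ h <= IZR j * h).
  { destruct Hij as [Hi0|Hj0].
    - left. assert (1 <= IZR i) by (apply IZR_le; lia). nra.
    - right. assert (1 <= IZR j) by (apply IZR_le; lia). nra. }
  destruct (is_ImpInt2_rect_away s (IZR i * h) ((IZR i + 1) * h) (IZR j * h) ((IZR j + 1) * h) h)
    as [v [Hv [Hv0 HvB]]]; try nra.
  rewrite (Int2_eq (cell h i j) _ v Hv). split; auto.
  replace ((IZR i + 1) * h - IZR i * h) with h in HvB by ring.
  replace ((IZR j + 1) * h - IZR j * h) with h in HvB by ring. lra.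
Qed.

Lemma is_ImpInt2_cell00 L N s : 0 < L -> (1 <= N)%nat -> 3/2 <= s < 2 ->
  is_ImpInt2 (fun x y => Defs.ind (cell (gridh L N) 0 0) x y * xipow s x y) (Int2 (cell (gridh L N) 0 0) (xipow s)).
Proof.
  intros HL HN Hs. set (h := gridh L N). assert (Hh : 0 < h) by (apply gridh_pos; auto).
  destruct (is_ImpInt2_corner_bounds s h Hs Hh) as [v [Hv _]].
  assert (Hv' : is_ImpInt2 (fun x y => Defs.ind (cell h 0 0) x y * xipow s x y) v).
  { apply is_ImpInt2_ext_but_finite with (fun x y => Defs.ind (rect 0 h 0 h) x y * xipow s x y) nil nil; auto.
    intros x y _ _ _ _. f_equal. apply ind_iff. unfold rect, cell. simpl. lra. }
  rewrite (Int2_eq _ _ v Hv'). exact Hv'.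
Qed.

Definition grid_Int2 L N s (i j : Z) := b2R (in_grid N i && in_grid N j) * Int2 (cell (gridh L N) i j) (xipow s).

Lemma is_ImpInt2_grid L N s (i j : Z) : 0 < L -> (1 <= N)%nat -> 3/2 <= s < 2 ->
  is_ImpInt2 (fun x y => b2R (in_grid N i && in_grid N j) * (Defs.ind (cell (gridh L N) i j) x y * xipow s x y)) (grid_Int2 L N s i j).
Proof.
  intros HL HN Hs. unfold grid_Int2, b2R. destruct (in_grid N i) eqn:Ei; destruct (in_grid N j) eqn:Ej; simpl.
  - apply is_ImpInt2_ext_but_finite with (fun x y => Defs.ind (cell (gridh L N) i j) x y * xipow s x y) nil nil.
    intros; ring. replace (1 * Int2 (cell (gridh L N) i j) (xipow s)) with (Int2 (cell (gridh L N) i j) (xipow s)) by ring.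
    destruct (Z.eq_dec i 0) as [->|Hi]; [destruct (Z.eq_dec j 0) as [->|Hj]|].
    + apply is_ImpInt2_cell00; auto.
    + apply is_ImpInt2_cell; auto.
    + apply is_ImpInt2_cell; auto.
  - all: apply is_ImpInt2_ext_but_finite with (fun _ _ => 0) nil nil; [intros; ring|];
      replace (0 * Int2 (cell (gridh L N) i j) (xipow s)) with 0 by ring; apply is_ImpInt2_0.
Qed.

(* Off the lines [x = m h], [x = L], [y = n h], [y = L], the indicator of [T_mn] is the sum of
   the indicators of those of its four cells that lie in [[0, L]^2]. *)
Lemma Int2_Tmn L N s (m n : nat) : 0 < L -> (1 <= N)%nat -> 3/2 <= s < 2 ->
  Int2 (Tmn L (gridh L N) m n) (xipow s) =
  grid_Int2 L N s (Z.of_nat m - 1) (Z.of_nat n - 1) + grid_Int2 L N s (Z.of_nat m - 1) (Z.of_nat n) +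
  grid_Int2 L N s (Z.of_nat m) (Z.of_nat n - 1) + grid_Int2 L N s (Z.of_nat m) (Z.of_nat n).
Proof.
  intros HL HN Hs. set (h := gridh L N). assert (Hh : 0 < h) by (apply gridh_pos; auto).
  assert (HLh : L = INR N * h) by (apply L_gridh; auto).
  set (m' := Z.of_nat m). set (n' := Z.of_nat n).
  set (w := fun i j x y => b2R (in_grid N i && in_grid N j) * (Defs.ind (cell h i j) x y * xipow s x y)).
  apply Int2_eq.
  apply is_ImpInt2_ext_but_finite with
    (fun x y => (w (m' - 1)%Z (n' - 1)%Z x y + w (m' - 1)%Z n' x y) + (w m' (n' - 1)%Z x y + w m' n' x y))
    (INR m * h :: INR N * h :: nil) (INR n * h :: INR N * h :: nil).
  2: { rewrite Rplus_assoc.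
       apply is_ImpInt2_plus; (apply is_ImpInt2_plus; apply is_ImpInt2_grid; auto). }
  intros x y Hx Hy Hnx Hny.
  assert (Hx1 : x <> IZR m' * h) by (unfold m'; rewrite <- INR_IZR_INZ; intros ->; apply Hnx; left; auto).
  assert (Hx2 : x <> INR N * h) by (intros ->; apply Hnx; right; left; auto).
  assert (Hy1 : y <> IZR n' * h) by (unfold n'; rewrite <- INR_IZR_INZ; intros ->; apply Hny; left; auto).
  assert (Hy2 : y <> INR N * h) by (intros ->; apply Hny; right; left; auto).
  assert (HT : Defs.ind (Tmn L h m n) x y =
    indP ((slab h (m' - 1) x \/ slab h m' x) /\ 0 < x < INR N * h) *
    indP ((slab h (n' - 1) y \/ slab h n' y) /\ 0 < y < INR N * h)).
  { rewrite <- indP_and. apply indP_iff. unfold Tmn, cell, D1, slab. rewrite <- HLh. tauto. }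
  rewrite HT, (indP_two_slabs N h m' x), (indP_two_slabs N h n' y) by auto.
  assert (HC : forall i j, Defs.ind (cell h i j) x y = indP (slab h i x) * indP (slab h j y)).
  { intros i j. rewrite <- indP_and. reflexivity. }
  unfold w. rewrite !HC. unfold b2R.
  destruct (in_grid N (m' - 1)); destruct (in_grid N m');
  destruct (in_grid N (n' - 1)); destruct (in_grid N n'); simpl; ring.
Qed.

(** * The Gamma function near [0] and near [2] *)

Lemma exp_le x y : x <= y -> exp x <= exp y.
Proof. intros H. destruct (Req_dec x y) as [->|]. lra. left; apply exp_increasing; lra. Qed.

Lemma exp_neg_le1 t : 0 <= t -> exp (- t) <= 1.
Proof. intros Ht. rewrite <- exp_0. apply exp_le. lra. Qed.

Lemma Rpower_le_neg q a b : q <= 0 -> 0 < a -> a <= b -> Rpower b q <= Rpower a q.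
Proof.
  intros Hq Ha Hab. unfold Rpower. apply exp_le.
  assert (ln a <= ln b) by (apply ln_le; lra). nra.
Qed.

Lemma Rpower_le_self eta p : 0 < eta <= 1 -> 1 <= p -> Rpower eta p <= eta.
Proof.
  intros He Hp. assert (ln eta <= 0) by (rewrite <- ln_1; apply ln_le; lra).
  rewrite <- (Rpower_1 eta) at 2 by lra. unfold Rpower. apply exp_le. nra.
Qed.

Lemma t_exp_neg_le1 a : 0 <= a -> (a + 1) * exp (- a) <= 1.
Proof.
  intros Ha. pose proof (exp_ineq1_le a). pose proof (exp_pos a).
  rewrite exp_Ropp. apply Rmult_le_reg_r with (exp a); auto.
  rewrite Rmult_assoc, Rinv_l by lra. lra.
Qed.

Lemma t_exp_neg_ge a : 0 <= a -> 1 - a * a <= (a + 1) * exp (- a).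
Proof. intros Ha. pose proof (exp_ineq1_le (- a)). nra. Qed.

Lemma t_exp_neg_small M : 0 < M -> (M + 1) * exp (- M) <= 4 / M.
Proof.
  intros HM. pose proof (exp_ineq1_le (M / 2)). pose proof (exp_pos (M / 2)).
  assert (exp M = exp (M / 2) * exp (M / 2)) by (rewrite <- exp_plus; f_equal; field).
  assert ((1 + M / 2) * (1 + M / 2) <= exp M) by (rewrite H1; apply Rmult_le_compat; lra).
  rewrite exp_Ropp. pose proof (exp_pos M).
  apply Rmult_le_reg_r with (exp M * M). apply Rmult_lt_0_compat; lra.
  replace ((M + 1) * / exp M * (exp M * M)) with ((M + 1) * M) by (field; lra).
  replace (4 / M * (exp M * M)) with (4 * exp M) by (field; lra). nra.
Qed.

Definition gamma_integrand z t := Rpower t (z - 1) * exp (- t).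

Lemma gamma_integrand_continuous z t : 0 < t -> continuous (gamma_integrand z) t.
Proof. intros Ht. apply ex_derive_continuous_R. unfold gamma_integrand, Rpower. auto_derive. auto. Qed.

Lemma gamma_integrand_ge0 z t : 0 <= gamma_integrand z t.
Proof. unfold gamma_integrand. apply Rmult_le_pos; left; [apply Rpower_gt0|apply exp_pos]. Qed.

Lemma ex_RInt_gamma_integrand z a b : 0 < a -> a <= b -> ex_RInt (gamma_integrand z) a b.
Proof.
  intros Ha Hab. apply ex_RInt_continuous_R. intros t Ht. rewrite Rmin_left in Ht by lra.
  apply gamma_integrand_continuous; lra.
Qed.

Lemma RInt_split_le g c a b B1 B2 : 0 < a -> a <= b -> 0 <= B1 -> 0 <= B2 ->
  (forall u w, 0 < u -> u <= w -> ex_RInt g u w) ->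
  (forall u w, 0 < u -> u <= w -> w <= c -> RInt g u w <= B1) ->
  (forall u w, c <= u -> u <= w -> RInt g u w <= B2) ->
  RInt g a b <= B1 + B2.
Proof.
  intros Ha Hab HB1 HB2 Hex H1 H2.
  destruct (Rle_dec b c). specialize (H1 a b Ha Hab r). lra.
  destruct (Rle_dec c a). specialize (H2 a b r Hab). lra.
  rewrite <- (RInt_Chasles_R g a c b) by (apply Hex; lra).
  specialize (H1 a c Ha ltac:(lra) ltac:(lra)). specialize (H2 c b ltac:(lra) ltac:(lra)). lra.
Qed.

Lemma RInt_gamma_integrand_head z u w : 0 < z -> 0 < u -> u <= w -> w <= 1 ->
  RInt (gamma_integrand z) u w <= / z.
Proof.
  intros Hz Hu Huw Hw. destruct (RInt_Rpower u w z) as [Ex HR]; try lra.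
  apply Rle_trans with (RInt (fun t => Rpower t (z - 1)) u w).
  - apply RInt_le; auto. apply ex_RInt_gamma_integrand; auto. intros t Ht. unfold gamma_integrand.
    rewrite <- (Rmult_1_r (Rpower t (z - 1))) at 2. apply Rmult_le_compat_l.
    left; apply Rpower_gt0. apply exp_neg_le1; lra.
  - rewrite HR. assert (Rpower w z <= 1).
    { rewrite <- (Rpower_O w) by lra. assert (ln w <= 0) by (rewrite <- ln_1; apply ln_le; lra).
      unfold Rpower. apply exp_le. nra. }
    pose proof (Rpower_gt0 u z). unfold Rdiv. rewrite <- (Rmult_1_l (/ z)) at 2.
    apply Rmult_le_compat_r. left; apply Rinv_0_lt_compat; lra. lra.
Qed.

Lemma RInt_gamma_integrand_tail z c u w : z <= 2 -> 0 < c -> c <= u -> u <= w ->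
  RInt (gamma_integrand z) u w <= Rpower c (z - 2).
Proof.
  intros Hz Hc Hu Huw. destruct (RInt_t_exp_neg u w Huw) as [Ex HR].
  apply Rle_trans with (RInt (fun t => Rpower c (z - 2) * (t * exp (- t))) u w).
  - apply RInt_le; auto. apply ex_RInt_gamma_integrand; lra. apply ex_RInt_scal_R; auto.
    intros t Ht. unfold gamma_integrand. replace (z - 1) with ((z - 2) + 1) by ring.
    rewrite Rpower_plus, Rpower_1 by lra. rewrite <- Rmult_assoc. apply Rmult_le_compat_r.
    left; apply exp_pos. apply Rmult_le_compat_r. lra. apply Rpower_le_neg; lra.
  - rewrite RInt_scal_R, HR by auto. pose proof (t_exp_neg_le1 u ltac:(lra)).
    assert (0 < (w + 1) * exp (- w)) by (apply Rmult_lt_0_compat; [lra|apply exp_pos]).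
    pose proof (Rpower_gt0 c (z - 2)). rewrite <- (Rmult_1_r (Rpower c (z - 2))) at 2.
    apply Rmult_le_compat_l; lra.
Qed.

Lemma Rpower_base_1 p : Rpower 1 p = 1.
Proof. unfold Rpower. rewrite ln_1, Rmult_0_r. apply exp_0. Qed.

Lemma RInt_gamma_integrand_le z a b : 0 < z <= 2 -> 0 < a -> a <= b ->
  RInt (gamma_integrand z) a b <= / z + 1.
Proof.
  intros Hz Ha Hab. apply (RInt_split_le _ 1); auto; try lra.
  - left; apply Rinv_0_lt_compat; lra.
  - intros; apply ex_RInt_gamma_integrand; auto.
  - intros; apply RInt_gamma_integrand_head; lra.
  - intros u w Hu Huw. rewrite <- (Rpower_base_1 (z - 2)). apply RInt_gamma_integrand_tail; lra.
Qed.

Lemma is_ImpInt_Gamma z : 0 < z <= 2 -> is_ImpInt (gamma_integrand z) (Gamma z).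
Proof.
  intros Hz. destruct (ex_is_ImpInt_nonneg_bounded (gamma_integrand z) (/ z + 1)) as [v Hv].
  - intros; apply gamma_integrand_ge0.
  - intros; apply ex_RInt_gamma_integrand; auto.
  - intros; apply RInt_gamma_integrand_le; auto.
  - replace (Gamma z) with v. auto. symmetry. apply ImpInt0inf_eq. exact Hv.
Qed.

Lemma Gamma_pole_ub z : 0 < z <= 2 -> z * Gamma z <= 1 + z.
Proof.
  intros Hz. apply Rle_trans with (z * (/ z + 1)); [|right; field; lra].
  apply Rmult_le_compat_l. lra. apply (is_ImpInt_ub _ _ _ (is_ImpInt_Gamma z Hz)).
  intros; apply RInt_gamma_integrand_le; auto.
Qed.

(* Over [[dl^(1/z), dl]] the factor [exp (- t)] is at least [exp (- dl)], and
   [int t^(z-1) = (dl^z - dl) / z] there. *)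
Lemma Gamma_pole_lb z dl : 0 < z <= 1 -> 0 < dl <= 1 ->
  exp (- dl) * (Rpower dl z - dl) <= z * Gamma z.
Proof.
  intros Hz Hdl. set (u := Rpower dl (/ z)).
  assert (Hu : 0 < u) by apply Rpower_gt0.
  assert (Hu2 : u <= dl).
  { apply Rpower_le_self. lra. replace 1 with (/ 1) by field. apply Rinv_le_contravar; lra. }
  assert (Huz : Rpower u z = dl).
  { unfold u. rewrite Rpower_mult. replace (/ z * z) with 1 by (field; lra). apply Rpower_1; lra. }
  assert (HG := RInt_le_is_ImpInt _ _ (is_ImpInt_Gamma z ltac:(lra))
                  (fun t _ => gamma_integrand_ge0 z t) u dl Hu Hu2).
  destruct (RInt_Rpower u dl z) as [Ex HR]; try lra.
  assert (RInt (fun t => exp (- dl) * Rpower t (z - 1)) u dl <= RInt (gamma_integrand z) u dl).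
  { apply RInt_le; auto. apply ex_RInt_scal_R; auto. apply ex_RInt_gamma_integrand; lra.
    intros t Ht. unfold gamma_integrand. rewrite Rmult_comm. apply Rmult_le_compat_l.
    left; apply Rpower_gt0. apply exp_le. lra. }
  rewrite RInt_scal_R, HR, Huz in H by auto.
  apply Rle_trans with (z * (exp (- dl) * ((Rpower dl z - dl) / z))).
  right. field. lra. apply Rmult_le_compat_l; lra.
Qed.

Lemma Gamma_lb z eta M : 1 <= z <= 2 -> 0 <= eta -> 0 < eta <= M ->
  Rpower M (z - 2) * (1 - eta * eta - (M + 1) * exp (- M)) <= Gamma z.
Proof.
  intros Hz Het HM.
  assert (HL := RInt_le_is_ImpInt _ _ (is_ImpInt_Gamma z ltac:(lra))
                  (fun t _ => gamma_integrand_ge0 z t) eta M ltac:(lra) ltac:(lra)).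
  destruct (RInt_t_exp_neg eta M ltac:(lra)) as [Ex HR].
  assert (RInt (fun t => Rpower M (z - 2) * (t * exp (- t))) eta M <= RInt (gamma_integrand z) eta M).
  { apply RInt_le; try lra. apply ex_RInt_scal_R; auto. apply ex_RInt_gamma_integrand; lra.
    intros t Ht. unfold gamma_integrand. replace (z - 1) with ((z - 2) + 1) by ring.
    rewrite Rpower_plus, Rpower_1 by lra. rewrite <- Rmult_assoc. apply Rmult_le_compat_r.
    left; apply exp_pos. apply Rmult_le_compat_r. lra. apply Rpower_le_neg; lra. }
  rewrite RInt_scal_R, HR in H by auto.
  pose proof (t_exp_neg_ge eta Het). pose proof (Rpower_gt0 M (z - 2)).
  apply Rle_trans with (Rpower M (z - 2) * ((eta + 1) * exp (- eta) - (M + 1) * exp (- M))).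
  apply Rmult_le_compat_l; lra. lra.
Qed.

Lemma Gamma_ub z dl : 1 <= z <= 2 -> 0 < dl <= 1 -> Gamma z <= dl + Rpower dl (z - 2).
Proof.
  intros Hz Hdl. apply (is_ImpInt_ub _ _ _ (is_ImpInt_Gamma z ltac:(lra))).
  intros a b Ha Hab. apply (RInt_split_le _ dl); auto; try (left; apply Rpower_gt0); try lra.
  - intros; apply ex_RInt_gamma_integrand; auto.
  - intros p q Hp Hpq Hq. apply Rle_trans with (RInt (fun _ => 1) p q).
    + apply RInt_le; auto. apply ex_RInt_gamma_integrand; auto. apply ex_RInt_const.
      intros t Ht. unfold gamma_integrand. rewrite <- (Rmult_1_l 1).
      apply Rmult_le_compat; try (left; apply Rpower_gt0); try (left; apply exp_pos).
      * apply Rle_trans with (Rpower t 0); [|rewrite Rpower_O by lra; lra].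
        unfold Rpower. apply exp_le.
        assert (ln t <= 0) by (rewrite <- ln_1; apply ln_le; lra). nra.
      * apply exp_neg_le1; lra.
    + rewrite RInt_const_R. lra.
  - intros; apply RInt_gamma_integrand_tail; lra.
Qed.

Lemma lim_left_Gamma_pole : is_lim_left (fun a => (1 - a / 2) * Gamma (1 - a / 2)) 2 1.
Proof.
  apply is_lim_left_squeeze. intros e He.
  set (dl := Rmin (e / 4) (1 / 2)).
  assert (Hdl : 0 < dl) by (unfold dl; apply Rmin_pos; lra).
  assert (Hdl1 : dl <= e / 4) by apply Rmin_l. assert (Hdl2 : dl <= 1 / 2) by apply Rmin_r.
  exists (fun a => 1 + (1 - a / 2)), (fun a => exp (- dl) * (Rpower dl (1 + (-1/2) * a) - dl)),
    (1 + (1 - 2/2)), (exp (- dl) * (Rpower dl (1 + (-1/2) * 2) - dl)).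
  split; [|split; [|split; [|split]]].
  - apply is_lim_left_plus. apply is_lim_left_const. apply is_lim_left_plus. apply is_lim_left_const.
    apply is_lim_left_opp. unfold Rdiv. apply is_lim_left_mult. apply is_lim_left_id.
    apply is_lim_left_const.
  - apply is_lim_left_mult. apply is_lim_left_const. apply is_lim_left_plus.
    apply is_lim_left_Rpower_affine; auto. apply is_lim_left_const.
  - lra.
  - replace (1 + -1/2 * 2) with 0 by field. rewrite Rpower_O by auto.
    pose proof (exp_ineq1_le (- dl)). nra.
  - exists (1 / 2). split. lra. intros a Ha.
    replace (1 + -1/2 * a) with (1 - a / 2) by field. split.
    + apply Gamma_pole_lb; lra.
    + apply Gamma_pole_ub; lra.
Qed.

Lemma lim_left_Gamma_shift : is_lim_left (fun a => Gamma ((2 + a) / 2)) 2 1.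
Proof.
  apply is_lim_left_squeeze. intros e He.
  set (dl := Rmin (e / 2) (1 / 2)).
  assert (Hdl : 0 < dl) by (unfold dl; apply Rmin_pos; lra).
  assert (Hdl1 : dl <= e / 2) by apply Rmin_l. assert (Hdl2 : dl <= 1 / 2) by apply Rmin_r.
  set (eta := Rmin (e / 4) (1 / 2)).
  assert (Het : 0 < eta) by (unfold eta; apply Rmin_pos; lra).
  assert (Het1 : eta <= e / 4) by apply Rmin_l. assert (Het2 : eta <= 1 / 2) by apply Rmin_r.
  set (M := 16 / e + 1).
  assert (HM : 1 < M) by (unfold M; assert (0 < 16 / e) by (apply Rdiv_lt_0_compat; lra); lra).
  set (K := 1 - eta * eta - (M + 1) * exp (- M)).
  exists (fun a => dl + Rpower dl (-1 + (1/2) * a)), (fun a => Rpower M (-1 + (1/2) * a) * K),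
    (dl + Rpower dl (-1 + (1/2) * 2)), (Rpower M (-1 + (1/2) * 2) * K).
  split; [|split; [|split; [|split]]].
  - apply is_lim_left_plus. apply is_lim_left_const. apply is_lim_left_Rpower_affine; auto.
  - apply is_lim_left_mult. apply is_lim_left_Rpower_affine; lra. apply is_lim_left_const.
  - replace (-1 + 1/2 * 2) with 0 by field. rewrite Rpower_O by lra. lra.
  - replace (-1 + 1/2 * 2) with 0 by field. rewrite Rpower_O by lra.
    unfold K. pose proof (t_exp_neg_small M ltac:(lra)).
    assert (4 / M < e / 4).
    { unfold M. assert (0 < 16 / e) by (apply Rdiv_lt_0_compat; lra).
      apply Rmult_lt_reg_r with (16 / e + 1). lra.
      replace (4 / (16 / e + 1) * (16 / e + 1)) with 4 by (field; lra).
      replace (e / 4 * (16 / e + 1)) with (4 + e / 4) by (field; lra). lra. }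
    assert (eta * eta <= e / 8) by nra. lra.
  - exists (1 / 2). split. lra. intros a Ha.
    replace (-1 + 1/2 * a) with ((2 + a) / 2 - 2) by field. split.
    + apply Gamma_lb; lra.
    + apply Gamma_ub; lra.
Qed.

(** * The corner cell and the constant [c_{2,alpha}] *)

Lemma atan_small e : 0 < e -> exists dl, 0 < dl /\ forall y, 0 <= y < dl -> atan y < e.
Proof.
  intros He. assert (Hc : continuous atan 0) by (apply ex_derive_continuous_R; auto_derive; auto).
  destruct (continuous_eps atan 0 Hc e He) as [dl [Hdl H]]. exists dl. split; auto.
  intros y Hy. specialize (H y ltac:(rewrite Rminus_0_r, Rabs_right; lra)).
  rewrite atan_0, Rminus_0_r in H. apply Rabs_lt_between in H. lra.
Qed.

Lemma atan_near_PI2 h e : 0 < h -> 0 < e -> exists dl, 0 < dl <= h /\ PI / 2 - e < atan (h / dl).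
Proof.
  intros Hh He. destruct (atan_small e He) as [d0 [Hd0 Hat]].
  set (dl := Rmin h (d0 * h / 2)).
  assert (Hdl : 0 < dl) by (unfold dl; apply Rmin_pos; nra).
  assert (Hdlh : dl <= h) by apply Rmin_l. assert (Hdl2 : dl <= d0 * h / 2) by apply Rmin_r.
  exists dl. split. lra.
  replace (h / dl) with (/ (dl / h)) by (field; lra). rewrite atan_inv by (apply Rdiv_lt_0_compat; lra).
  assert (atan (dl / h) < e); [|lra]. apply Hat. split. apply Rlt_le, Rdiv_lt_0_compat; lra.
  apply Rmult_lt_reg_r with h; auto. unfold Rdiv; rewrite Rmult_assoc, Rinv_l, Rmult_1_r by lra. nra.
Qed.

Lemma Kern_ub_near_PI2 e : 0 < e -> exists T, 1 <= T /\ Kern_ub 2 T < PI / 2 + e.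
Proof.
  intros He. set (T := (4 / e) * (4 / e) + 1). exists T.
  assert (HT : 1 <= T) by (unfold T; nra). split; auto.
  assert (HsT : 4 / e < sqrt T).
  { assert (0 < 4 / e) by (apply Rdiv_lt_0_compat; lra).
    rewrite <- (sqrt_square (4 / e)) by lra. apply sqrt_lt_1; unfold T; nra. }
  assert (0 < sqrt T) by (apply sqrt_lt_R0; lra).
  assert (/ sqrt T < e / 4).
  { apply Rmult_lt_reg_r with (sqrt T); auto. rewrite Rinv_l by lra.
    assert (e / 4 * (4 / e) = 1) by (field; lra). nra. }
  unfold Kern_ub. replace (1 - 2 / 2) with 0 by field.
  rewrite Rpower_O, Rpower_Ropp, Rpower_sqrt by nra. lra.
Qed.

Lemma is_lim_left_Kern_ub T : is_lim_left (fun a => Kern_ub a T) 2 (Kern_ub 2 T).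
Proof.
  unfold Kern_ub. apply is_lim_left_plus; [|apply is_lim_left_const].
  apply is_lim_left_mult; [|apply is_lim_left_const].
  apply (is_lim_left_ext_loc (fun a => Rpower (1 + T * T) (1 + (-1/2) * a))).
  - exists 1. split. lra. intros; f_equal; field.
  - replace (1 - 2 / 2) with (1 + (-1/2) * 2) by field. apply is_lim_left_Rpower_affine. nra.
Qed.

(* The lower bound comes from [is_ImpInt2_corner_bounds] at [u = eta^(1 / (2 - a))]. *)
Lemma corner_Int2_bounds a h T dl eta : 3/2 <= a < 2 -> 0 < h -> 1 <= T ->
  0 < dl <= h -> 0 < eta <= dl -> eta <= 1 ->
  atan (h / dl) * (Rpower dl (2 - a) - eta) <= (2 - a) * Int2 (rect 0 h 0 h) (xipow a) /\
  (2 - a) * Int2 (rect 0 h 0 h) (xipow a) <= Kern_ub a T * Rpower h (2 - a).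
Proof.
  intros Ha Hh HT Hdl Het Het1.
  destruct (is_ImpInt2_corner_bounds a h ltac:(lra) Hh) as [v [Hv [Hup Hlow]]].
  rewrite (Int2_eq _ _ v Hv). split.
  - set (u := Rpower eta (/ (2 - a))).
    assert (Hu : 0 < u) by apply Rpower_gt0.
    assert (Hu2 : u <= eta).
    { apply Rpower_le_self. lra. replace 1 with (/ 1) by field. apply Rinv_le_contravar; lra. }
    assert (Huz : Rpower u (2 - a) = eta).
    { unfold u. rewrite Rpower_mult. replace (/ (2 - a) * (2 - a)) with 1 by (field; lra).
      apply Rpower_1; lra. }
    specialize (Hlow u dl Hu ltac:(lra) ltac:(lra)). rewrite Huz in Hlow.
    apply Rle_trans with ((2 - a) * (atan (h / dl) * (Rpower dl (2 - a) - eta) / (2 - a))).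
    right; field; lra. apply Rmult_le_compat_l; lra.
  - apply Rle_trans with ((2 - a) * (Kern_ub a T * Rpower h (2 - a) / (2 - a))).
    apply Rmult_le_compat_l; [lra|auto]. right. field; lra.
Qed.

Lemma lim_left_corner h : 0 < h ->
  is_lim_left (fun a => (2 - a) * Int2 (rect 0 h 0 h) (xipow a)) 2 (PI / 2).
Proof.
  intros Hh. apply is_lim_left_squeeze. intros e He.
  destruct (Kern_ub_near_PI2 e He) as [T [HT HTe]].
  destruct (atan_near_PI2 h (e / 4) Hh ltac:(lra)) as [dl [Hdl Hath]].
  set (eta := Rmin (Rmin (1 / 2) dl) (e / 8)).
  assert (Het : 0 < eta) by (unfold eta; repeat apply Rmin_pos; lra).
  assert (eta <= Rmin (1/2) dl) by apply Rmin_l. assert (eta <= e / 8) by apply Rmin_r.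
  assert (Rmin (1/2) dl <= 1/2) by apply Rmin_l. assert (Rmin (1/2) dl <= dl) by apply Rmin_r.
  exists (fun a => Kern_ub a T * Rpower h (2 + (-1) * a)),
    (fun a => atan (h / dl) * (Rpower dl (2 + (-1) * a) - eta)),
    (Kern_ub 2 T * Rpower h (2 + (-1) * 2)), (atan (h / dl) * (Rpower dl (2 + (-1) * 2) - eta)).
  replace (2 + -1 * 2) with 0 by ring. rewrite !Rpower_O by lra.
  split; [|split; [|split; [|split]]].
  - apply is_lim_left_mult. apply is_lim_left_Kern_ub.
    rewrite <- (Rpower_O h) by lra. replace 0 with (2 + -1 * 2) by ring.
    apply is_lim_left_Rpower_affine; auto.
  - apply is_lim_left_mult. apply is_lim_left_const. apply is_lim_left_plus.
    rewrite <- (Rpower_O dl) by lra. replace 0 with (2 + -1 * 2) by ring.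
    apply is_lim_left_Rpower_affine; lra. apply is_lim_left_const.
  - lra.
  - assert (atan (h / dl) <= PI / 2) by apply atan_le_PI2. pose proof PI_RGT_0. pose proof PI_4.
    assert (atan (h / dl) * eta <= PI / 2 * eta) by (apply Rmult_le_compat_r; lra). nra.
  - exists (1 / 2). split. lra. intros a Ha. replace (2 + -1 * a) with (2 - a) by ring.
    destruct (corner_Int2_bounds a h T dl eta); lra.
Qed.

(* [c2 a = (2 - a) * c2_regular a] once [Gamma (1 - a / 2)] is nonzero, and [c2_regular]
   is continuous from the left at [2]. *)
Definition c2_regular a := Rpower 2 (a - 1) * a * Gamma ((2 + a) / 2) / (2 * PI * ((1 - a / 2) * Gamma (1 - a / 2))).

Lemma lim_left_c2_regular : is_lim_left c2_regular 2 (2 / PI).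
Proof.
  assert (HPI := PI_RGT_0).
  unfold c2_regular. replace (2 / PI) with (Rpower 2 (-1 + 1 * 2) * 2 * 1 * / (2 * PI * 1)).
  2: { replace (-1 + 1 * 2) with 1 by ring. rewrite Rpower_1 by lra. field. lra. }
  apply is_lim_left_mult. apply is_lim_left_mult. apply is_lim_left_mult.
  apply (is_lim_left_ext_loc (fun a => Rpower 2 (-1 + 1 * a))).
  exists 1. split. lra. intros; f_equal; ring. apply is_lim_left_Rpower_affine; lra. apply is_lim_left_id. apply lim_left_Gamma_shift.
  apply (is_lim_left_comp (fun a => 2 * PI * ((1 - a / 2) * Gamma (1 - a / 2))) Rinv).
  apply is_lim_left_mult. apply is_lim_left_const. apply lim_left_Gamma_pole.
  apply continuity_pt_filterlim. apply (ex_derive_continuous_R Rinv (2 * PI * 1)). auto_derive. lra.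
Qed.

Lemma Gamma_pole_gt_half : exists dl, 0 < dl /\ forall a, 2 - dl < a < 2 -> 1 / 2 < (1 - a / 2) * Gamma (1 - a / 2).
Proof.
  destruct (lim_left_Gamma_pole (1 / 2)) as [dl [Hdl H]]. lra. exists dl. split; auto. intros a Ha.
  specialize (H a Ha). apply Rabs_lt_between in H. lra.
Qed.

Lemma c2_factor a : 1 / 2 < (1 - a / 2) * Gamma (1 - a / 2) -> a < 2 -> c2 a = (2 - a) * c2_regular a.
Proof.
  intros H Ha. assert (HPI := PI_RGT_0).
  assert (Gamma (1 - a / 2) <> 0) by (intros E; rewrite E in H; lra).
  unfold c2, c2_regular. field. repeat split; lra.
Qed.

Lemma c2_factor_near : exists dl, 0 < dl /\ forall a, 2 - dl < a < 2 -> c2 a = (2 - a) * c2_regular a.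
Proof.
  destruct Gamma_pole_gt_half as [dl [Hdl H]]. exists dl. split; auto. intros a Ha. apply c2_factor; auto; lra.
Qed.

Lemma is_lim_left_2_minus : is_lim_left (fun a => 2 - a) 2 0.
Proof. replace 0 with (2 + - 2) by ring. apply is_lim_left_plus. apply is_lim_left_const. apply is_lim_left_opp. apply is_lim_left_id. Qed.

Lemma lim_left_c2 : is_lim_left c2 2 0.
Proof.
  apply is_lim_left_ext_loc with (fun a => (2 - a) * c2_regular a).
  destruct c2_factor_near as [dl [Hdl H]]. exists dl. split; auto. intros; symmetry; auto.
  replace 0 with (0 * (2 / PI)) by ring. apply is_lim_left_mult. apply is_lim_left_2_minus. apply lim_left_c2_regular.
Qed.

Lemma lim_left_c2_Int2_cell00 L N : 0 < L -> (1 <= N)%nat ->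
  is_lim_left (fun a => c2 a * Int2 (cell (gridh L N) 0 0) (xipow a)) 2 1.
Proof.
  intros HL HN. set (h := gridh L N). assert (Hh : 0 < h) by (apply gridh_pos; auto).
  assert (HPI := PI_RGT_0).
  apply is_lim_left_ext_loc with (fun a => c2_regular a * ((2 - a) * Int2 (rect 0 h 0 h) (xipow a))).
  destruct c2_factor_near as [dl [Hdl H]]. exists dl. split; auto. intros a Ha. rewrite H by auto.
  rewrite (Int2_set_ext (cell h 0 0) (rect 0 h 0 h)). ring. intros x y. unfold cell, rect. simpl. lra.
  replace 1 with (2 / PI * (PI / 2)) by (field; lra). apply is_lim_left_mult. apply lim_left_c2_regular. apply lim_left_corner; auto.
Qed.

(** * Limits of the coefficients *)

Lemma Rpower_between_le h s : 0 < h -> 1 <= s <= 2 -> Rpower h (- s) <= Rpower h (-1) + Rpower h (-2).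
Proof.
  intros Hh Hs. assert (0 < Rpower h (-1)) by apply Rpower_gt0.
  assert (0 < Rpower h (-2)) by apply Rpower_gt0.
  destruct (Rle_dec 1 h).
  - assert (Rpower h (- s) <= Rpower h (-1)) by (apply Rle_Rpower; lra). lra.
  - assert (Rpower h (- s) <= Rpower h (-2)).
    { unfold Rpower. apply exp_le. assert (ln h < 0) by (rewrite <- ln_1; apply ln_increasing; lra). nra. }
    lra.
Qed.

Definition cell_bound h := h * (h * (Rpower h (-1) + Rpower h (-2))).

Lemma grid_Int2_bound L N s (i j : Z) : 0 < L -> (1 <= N)%nat -> 3/2 <= s < 2 -> (i <> 0 \/ j <> 0)%Z ->
  0 <= grid_Int2 L N s i j <= cell_bound (gridh L N).
Proof.
  intros HL HN Hs Hij. set (h := gridh L N). assert (Hh : 0 < h) by (apply gridh_pos; auto).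
  assert (0 < Rpower h (-1)) by apply Rpower_gt0.
  assert (0 < Rpower h (-2)) by apply Rpower_gt0.
  assert (0 <= cell_bound h) by (unfold cell_bound; apply Rmult_le_pos; [lra|apply Rmult_le_pos; lra]).
  unfold grid_Int2, b2R. destruct (in_grid N i) eqn:Ei; destruct (in_grid N j) eqn:Ej; simpl; try lra.
  destruct (is_ImpInt2_cell L N s i j HL HN Hs Ei Ej Hij) as [_ [K1 K2]]. fold h in K1, K2 |- *.
  split. lra. apply Rle_trans with (h * (h * Rpower h (- s))). lra.
  unfold cell_bound. apply Rmult_le_compat_l. lra. apply Rmult_le_compat_l. lra. apply Rpower_between_le; lra.
Qed.

Lemma in_grid_0 N : (1 <= N)%nat -> in_grid N 0 = true.
Proof. intros HN. unfold in_grid. apply andb_true_iff. split. reflexivity. apply Z.ltb_lt. lia. Qed.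

Lemma grid_Int2_00 L N s : (1 <= N)%nat -> grid_Int2 L N s 0 0 = Int2 (cell (gridh L N) 0 0) (xipow s).
Proof. intros HN. unfold grid_Int2, b2R. rewrite in_grid_0 by auto. simpl. ring. Qed.

Lemma grid_Int2_neg L N s (i j : Z) : (i < 0 \/ j < 0)%Z -> grid_Int2 L N s i j = 0.
Proof.
  intros Hij. unfold grid_Int2, b2R.
  replace (in_grid N i && in_grid N j)%bool with false. ring.
  unfold in_grid. destruct Hij as [Hi|Hj].
  - replace (0 <=? i)%Z with false by (symmetry; apply Z.leb_gt; lia). reflexivity.
  - replace (0 <=? j)%Z with false by (symmetry; apply Z.leb_gt; lia). rewrite !andb_false_r. reflexivity.
Qed.

(* Inside [D_1], [T_10] is [I_00] together with [I_10] (the cells of index [-1] are empty),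
   and [cbar_10 = 1] adds [I_00] once more; symmetrically for [a_01]. *)
Lemma amn_10 L N s : 0 < L -> (1 <= N)%nat -> 3/2 <= s < 2 ->
  amn L N s 1 0 = 2 / (4 * (gridh L N) ^ 2) * (2 * Int2 (cell (gridh L N) 0 0) (xipow s) + grid_Int2 L N s 1 0).
Proof.
  intros HL HN Hs. unfold amn. rewrite Int2_Tmn by auto. simpl (Z.of_nat 1). simpl (Z.of_nat 0).
  simpl (1 - 1)%Z. simpl (0 - 1)%Z.
  rewrite (grid_Int2_neg L N s 0 (-1)), (grid_Int2_neg L N s 1 (-1)), grid_Int2_00 by (auto; lia).
  unfold sigma, cbar. simpl. replace (1 * gridh L N) with (gridh L N) by ring. field.
  assert (0 < gridh L N) by (apply gridh_pos; auto). lra.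
Qed.

Lemma amn_01 L N s : 0 < L -> (1 <= N)%nat -> 3/2 <= s < 2 ->
  amn L N s 0 1 = 2 / (4 * (gridh L N) ^ 2) * (2 * Int2 (cell (gridh L N) 0 0) (xipow s) + grid_Int2 L N s 0 1).
Proof.
  intros HL HN Hs. unfold amn. rewrite Int2_Tmn by auto. simpl (Z.of_nat 1). simpl (Z.of_nat 0).
  simpl (1 - 1)%Z. simpl (0 - 1)%Z.
  rewrite (grid_Int2_neg L N s (-1) 0), (grid_Int2_neg L N s (-1) 1), grid_Int2_00 by (auto; lia).
  unfold sigma, cbar. simpl. replace (1 * gridh L N) with (gridh L N) by ring. field.
  assert (0 < gridh L N) by (apply gridh_pos; auto). lra.
Qed.

Lemma lim_left_c2_axis L N (f : R -> R) (i j : Z) : 0 < L -> (1 <= N)%nat -> (i <> 0 \/ j <> 0)%Z ->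
  (forall s, 3/2 <= s < 2 -> f s =
     2 / (4 * (gridh L N) ^ 2) * (2 * Int2 (cell (gridh L N) 0 0) (xipow s) + grid_Int2 L N s i j)) ->
  is_lim_left (fun a => c2 a * f a) 2 (1 / (gridh L N) ^ 2).
Proof.
  intros HL HN Hij Hf. set (h := gridh L N). assert (Hh : 0 < h) by (apply gridh_pos; auto).
  apply is_lim_left_ext_loc with
    (fun a => 2 / (4 * h ^ 2) * (2 * (c2 a * Int2 (cell h 0 0) (xipow a)) + c2 a * grid_Int2 L N a i j)).
  { exists (1 / 2). split. lra. intros a Ha. rewrite Hf by lra. fold h. ring. }
  replace (1 / h ^ 2) with (2 / (4 * h ^ 2) * (2 * 1 + 0)) by (field; lra).
  apply is_lim_left_mult. apply is_lim_left_const. apply is_lim_left_plus.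
  - apply is_lim_left_mult. apply is_lim_left_const. apply lim_left_c2_Int2_cell00; auto.
  - apply (is_lim_left_mult_bounded c2 _ 2 (cell_bound h)). apply lim_left_c2.
    exists (1 / 2). split. lra. intros a Ha.
    destruct (grid_Int2_bound L N a i j) as [H1 H2]; auto; try lra.
    fold h in H1, H2. rewrite Rabs_right; lra.
Qed.

Lemma lim_left_c2_a10 L N : 0 < L -> (1 <= N)%nat ->
  is_lim_left (fun a => c2 a * amn L N a 1 0) 2 (1 / (gridh L N) ^ 2).
Proof. intros HL HN. apply (lim_left_c2_axis L N _ 1 0); auto. lia. intros; apply amn_10; auto. Qed.

Lemma lim_left_c2_a01 L N : 0 < L -> (1 <= N)%nat ->
  is_lim_left (fun a => c2 a * amn L N a 0 1) 2 (1 / (gridh L N) ^ 2).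
Proof. intros HL HN. apply (lim_left_c2_axis L N _ 0 1); auto. lia. intros; apply amn_01; auto. Qed.

Lemma amn_bracket_bound L N s (m n : nat) : 0 < L -> (1 <= N)%nat -> 3/2 <= s < 2 -> (m + n > 1)%nat ->
  Rabs (Int2 (Tmn L (gridh L N) m n) (xipow s) + cbar m n * Int2 (cell (gridh L N) 0 0) (xipow s))
    <= 4 * cell_bound (gridh L N).
Proof.
  intros HL HN Hs Hmn. rewrite Int2_Tmn by auto.
  assert (B : forall i j, (i <> 0 \/ j <> 0)%Z -> 0 <= grid_Int2 L N s i j <= cell_bound (gridh L N)).
  { intros; apply grid_Int2_bound; auto. }
  destruct (Nat.eq_dec m 1) as [->|Hm]; [destruct (Nat.eq_dec n 1) as [->|Hn]|].
  - simpl (Z.of_nat 1). simpl (1 - 1)%Z. rewrite grid_Int2_00 by auto. unfold cbar.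
    pose proof (B 0%Z 1%Z ltac:(lia)). pose proof (B 1%Z 0%Z ltac:(lia)). pose proof (B 1%Z 1%Z ltac:(lia)).
    rewrite Rabs_right; lra.
  - assert (cbar 1 n = 0) as ->. { unfold cbar. destruct n as [|[|n]]; try lia; reflexivity. }
    assert (2 <= n)%nat by lia.
    pose proof (B 0%Z (Z.of_nat n - 1)%Z ltac:(lia)). pose proof (B 0%Z (Z.of_nat n)%Z ltac:(lia)).
    pose proof (B 1%Z (Z.of_nat n - 1)%Z ltac:(lia)). pose proof (B 1%Z (Z.of_nat n)%Z ltac:(lia)).
    simpl (Z.of_nat 1). simpl (1 - 1)%Z. rewrite Rabs_right; lra.
  - assert (cbar m n = 0) as ->. { unfold cbar. destruct m as [|[|m]]; destruct n as [|[|n]]; try lia; reflexivity. }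
    destruct (Nat.eq_dec m 0) as [->|Hm0].
    + assert (2 <= n)%nat by lia.
      pose proof (B (-1)%Z (Z.of_nat n - 1)%Z ltac:(lia)). pose proof (B (-1)%Z (Z.of_nat n)%Z ltac:(lia)).
      pose proof (B 0%Z (Z.of_nat n - 1)%Z ltac:(lia)). pose proof (B 0%Z (Z.of_nat n)%Z ltac:(lia)).
      simpl (Z.of_nat 0). simpl (0 - 1)%Z. rewrite Rabs_right; lra.
    + assert (2 <= m)%nat by lia.
      pose proof (B (Z.of_nat m - 1)%Z (Z.of_nat n - 1)%Z ltac:(lia)). pose proof (B (Z.of_nat m - 1)%Z (Z.of_nat n)%Z ltac:(lia)).
      pose proof (B (Z.of_nat m)%Z (Z.of_nat n - 1)%Z ltac:(lia)). pose proof (B (Z.of_nat m) (Z.of_nat n)%Z ltac:(lia)).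
      rewrite Rabs_right; lra.
Qed.

Lemma lim_left_c2_amn_far L N (m n : nat) : 0 < L -> (1 <= N)%nat -> (m + n > 1)%nat ->
  is_lim_left (fun a => c2 a * amn L N a m n) 2 0.
Proof.
  intros HL HN Hmn. set (h := gridh L N).
  set (D := 2 ^ Defs.sigma m n / (4 * ((INR m * h) ^ 2 + (INR n * h) ^ 2))).
  apply (is_lim_left_mult_bounded c2 (fun a => amn L N a m n) 2 (Rabs D * (4 * cell_bound h))). apply lim_left_c2.
  exists (1 / 2). split. lra. intros a Ha. unfold amn. fold h. fold D. rewrite Rabs_mult.
  apply Rmult_le_compat_l. apply Rabs_pos. apply amn_bracket_bound; auto; lra.
Qed.

Lemma sum_f_R0_mult_l c (f : nat -> R) n : c * sum_f_R0 f n = sum_f_R0 (fun k => c * f k) n.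
Proof. induction n; simpl. ring. rewrite <- IHn. ring. Qed.

Lemma sum_f_R0_first c n : sum_f_R0 (fun k => match k with O => c | S _ => 0 end) n = c.
Proof. induction n; simpl. ring. rewrite IHn. ring. Qed.

Lemma sum_f_R0_0 n : sum_f_R0 (fun _ => 0) n = 0.
Proof. induction n; simpl. ring. rewrite IHn. ring. Qed.

Lemma lim_left_c2_Int2_D2 L : 0 < L -> is_lim_left (fun a => c2 a * Int2 (D2 L) (xipow (2 + a))) 2 0.
Proof.
  intros HL.
  apply (is_lim_left_mult_bounded c2 _ 2 (3 * (Rpower L (-1) + Rpower L (-2)))). apply lim_left_c2.
  exists (1 / 2). split. lra. intros a Ha.
  destruct (Int2_D2_bounds (2 + a) L) as [H1 H2]; try lra.
  assert (E : L * Rpower L (1 - (2 + a)) = Rpower L (2 - (2 + a))).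
  { replace (2 - (2 + a)) with (1 - (2 + a) + 1) by ring. rewrite Rpower_plus, Rpower_1 by lra. ring. }
  assert (Hb := Rpower_between_le L a HL ltac:(lra)). replace (2 - (2 + a)) with (- a) in E by ring.
  assert (0 < Rpower L (- a)) by apply Rpower_gt0.
  assert (B1 : L * (Rpower L (1 - (2 + a)) / (2 + a - 1)) <= Rpower L (- a)).
  { unfold Rdiv. rewrite <- Rmult_assoc, E. rewrite <- (Rmult_1_r (Rpower L (- a))) at 2.
    apply Rmult_le_compat_l. lra. replace 1 with (/ 1) by field. apply Rinv_le_contravar; lra. }
  assert (B2 : PI / 2 * (Rpower L (2 - (2 + a)) / (2 + a - 2)) <= 2 * Rpower L (- a)).
  { replace (2 - (2 + a)) with (- a) by ring. replace (2 + a - 2) with a by ring.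
    pose proof PI_4. pose proof PI_RGT_0.
    assert (/ a <= 1) by (replace 1 with (/ 1) by field; apply Rinv_le_contravar; lra).
    assert (0 < / a) by (apply Rinv_0_lt_compat; lra).
    unfold Rdiv. assert (Rpower L (- a) * / a <= Rpower L (- a)) by nra. nra. }
  rewrite Rabs_right by lra. lra.
Qed.

Lemma lim_left_c2_axis_sum L N : 0 < L -> (1 <= N)%nat ->
  is_lim_left (fun a => sum_f_R0 (fun k => c2 a * amn L N a (S k) 0 + c2 a * amn L N a 0 (S k)) (N - 1))
    2 (2 / (gridh L N) ^ 2).
Proof.
  intros HL HN. assert (Hh : 0 < gridh L N) by (apply gridh_pos; auto).
  rewrite <- (sum_f_R0_first (2 / (gridh L N) ^ 2) (N - 1)).
  apply is_lim_left_sum. intros [|k] Hk.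
  - replace (2 / gridh L N ^ 2) with (1 / gridh L N ^ 2 + 1 / gridh L N ^ 2) by (field; lra).
    apply is_lim_left_plus. apply lim_left_c2_a10; auto. apply lim_left_c2_a01; auto.
  - replace 0 with (0 + 0) by ring. apply is_lim_left_plus; apply lim_left_c2_amn_far; auto; lia.
Qed.

Lemma lim_left_c2_interior_sum L N : 0 < L -> (1 <= N)%nat ->
  is_lim_left (fun a => sum_f_R0 (fun k => sum_f_R0 (fun q => c2 a * amn L N a (S k) (S q)) (N - 1)) (N - 1))
    2 0.
Proof.
  intros HL HN. rewrite <- (sum_f_R0_0 (N - 1)). apply is_lim_left_sum. intros k Hk.
  rewrite <- (sum_f_R0_0 (N - 1)). apply is_lim_left_sum. intros q Hq.
  apply lim_left_c2_amn_far; auto; lia.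
Qed.

Lemma lim_left_c2_a00 L N : 0 < L -> (1 <= N)%nat ->
  is_lim_left (fun a => c2 a * a00 L N a) 2 (- 4 / (gridh L N) ^ 2).
Proof.
  intros HL HN. assert (Hh : 0 < gridh L N) by (apply gridh_pos; auto).
  apply is_lim_left_ext_loc with (fun a =>
    - 2 * sum_f_R0 (fun k => c2 a * amn L N a (S k) 0 + c2 a * amn L N a 0 (S k)) (N - 1)
    + - 4 * sum_f_R0 (fun k => sum_f_R0 (fun q => c2 a * amn L N a (S k) (S q)) (N - 1)) (N - 1)
    + - 4 * (c2 a * Int2 (D2 L) (xipow (2 + a)))).
  { exists 1. split. lra. intros a Ha. unfold a00.
    assert (EA : c2 a * sum_f_R0 (fun k => amn L N a (S k) 0 + amn L N a 0 (S k)) (N - 1) =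
      sum_f_R0 (fun k => c2 a * amn L N a (S k) 0 + c2 a * amn L N a 0 (S k)) (N - 1)).
    { rewrite sum_f_R0_mult_l. apply sum_eq. intros; ring. }
    assert (EB : c2 a * sum_f_R0 (fun k => sum_f_R0 (fun q => amn L N a (S k) (S q)) (N - 1)) (N - 1) =
      sum_f_R0 (fun k => sum_f_R0 (fun q => c2 a * amn L N a (S k) (S q)) (N - 1)) (N - 1)).
    { rewrite sum_f_R0_mult_l. apply sum_eq. intros; apply sum_f_R0_mult_l. }
    rewrite <- EA, <- EB. ring. }
  replace (- 4 / gridh L N ^ 2) with (- 2 * (2 / gridh L N ^ 2) + - 4 * 0 + - 4 * 0) by (field; lra).
  repeat apply is_lim_left_plus; apply is_lim_left_mult; try apply is_lim_left_const.
  - apply lim_left_c2_axis_sum; auto.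
  - apply lim_left_c2_interior_sum; auto.
  - apply lim_left_c2_Int2_D2; auto.
Qed.

Definition coef_limit h (m n : nat) : R :=
  if (Nat.eqb m 0 && Nat.eqb n 0)%bool then - 4 / h ^ 2
  else if ((Nat.eqb m 1 && Nat.eqb n 0) || (Nat.eqb m 0 && Nat.eqb n 1))%bool then 1 / h ^ 2 else 0.

Lemma coef_limit_far h (m n : nat) : (m + n > 1)%nat -> coef_limit h m n = 0.
Proof. intros Hmn. unfold coef_limit. destruct m as [|[|m]]; destruct n as [|[|n]]; simpl; lia || reflexivity. Qed.

Lemma lim_left_c2_acoef L N (m n : nat) : 0 < L -> (1 <= N)%nat ->
  is_lim_left (fun a => c2 a * acoef L N a m n) 2 (coef_limit (gridh L N) m n).
Proof.
  intros HL HN. unfold acoef, coef_limit.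
  destruct m as [|[|m]]; destruct n as [|[|n]]; simpl.
  - apply lim_left_c2_a00; auto.
  - apply lim_left_c2_a01; auto.
  - apply lim_left_c2_amn_far; auto; lia.
  - apply lim_left_c2_a10; auto.
  - apply lim_left_c2_amn_far; auto; lia.
  - apply lim_left_c2_amn_far; auto; lia.
  - apply lim_left_c2_amn_far; auto; lia.
  - apply lim_left_c2_amn_far; auto; lia.
  - apply lim_left_c2_amn_far; auto; lia.
Qed.

(** * The scheme *)

Definition kron (x y : nat) : R := b2R (Nat.eqb x y).

Lemma sum_kron (f : nat -> R) (P n : nat) :
  sum_f_R0 (fun k => kron (S k) P * f (S k)) n =
  if (Nat.leb 1 P && Nat.leb P (S n))%bool then f P else 0.
Proof.
  unfold kron, b2R. induction n; cbn [sum_f_R0].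
  - destruct (Nat.eqb_spec 1 P); destruct (Nat.leb_spec 1 P); destruct (Nat.leb_spec P 1);
    cbn [andb]; try subst; try ring; lia.
  - rewrite IHn. destruct (Nat.eqb_spec (S (S n)) P); destruct (Nat.leb_spec 1 P);
    destruct (Nat.leb_spec P (S n)); destruct (Nat.leb_spec P (S (S n))); cbn [andb]; try subst; try ring; lia.
Qed.

Lemma sum_kron2 (u : nat -> nat -> R) (N P Q : nat) : (2 <= N)%nat ->
  sum_f_R0 (fun k => sum_f_R0 (fun q => kron (S k) P * kron (S q) Q * u (S k) (S q)) (N - 2)) (N - 2) =
  uext N u P Q.
Proof.
  intros HN.
  rewrite (sum_eq _ (fun k => kron (S k) P * (if (Nat.leb 1 Q && Nat.leb Q (S (N - 2)))%bool then u (S k) Q else 0))).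
  2: { intros k _. rewrite <- (sum_kron (fun q => u (S k) q) Q (N - 2)). rewrite sum_f_R0_mult_l.
       apply sum_eq. intros; ring. }
  rewrite (sum_kron (fun p => if (Nat.leb 1 Q && Nat.leb Q (S (N - 2)))%bool then u p Q else 0)).
  unfold uext, Defs.interior. replace (S (N - 2)) with (N - 1)%nat by lia.
  destruct (Nat.leb 1 P && Nat.leb P (N - 1))%bool; destruct (Nat.leb 1 Q && Nat.leb Q (N - 1))%bool; reflexivity.
Qed.

Lemma absdiff_eqb_0 p i : Nat.eqb (absdiff p i) 0 = Nat.eqb p i.
Proof. unfold absdiff. destruct (Nat.eqb_spec (p - i + (i - p)) 0); destruct (Nat.eqb_spec p i); auto; lia. Qed.

Lemma absdiff_eqb_1 p i : (1 <= i)%nat -> Nat.eqb (absdiff p i) 1 = (Nat.eqb p (i + 1) || Nat.eqb p (i - 1))%bool.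
Proof.
  intros Hi. unfold absdiff. destruct (Nat.eqb_spec (p - i + (i - p)) 1); destruct (Nat.eqb_spec p (i + 1));
  destruct (Nat.eqb_spec p (i - 1)); simpl; auto; lia.
Qed.

Lemma coef_limit_stencil h p q i j : (1 <= i)%nat -> (1 <= j)%nat ->
  - coef_limit h (absdiff p i) (absdiff q j) =
  (4 * (kron p i * kron q j) - kron p (i + 1) * kron q j - kron p (i - 1) * kron q j
   - kron p i * kron q (j + 1) - kron p i * kron q (j - 1)) / h ^ 2.
Proof.
  intros Hi Hj. unfold coef_limit, kron, b2R. rewrite !absdiff_eqb_0, !absdiff_eqb_1 by auto.
  destruct (Nat.eqb_spec p i); destruct (Nat.eqb_spec p (i + 1)); destruct (Nat.eqb_spec p (i - 1));
  destruct (Nat.eqb_spec q j); destruct (Nat.eqb_spec q (j + 1)); destruct (Nat.eqb_spec q (j - 1));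
  simpl; try (exfalso; lia); unfold Rdiv; ring.
Qed.

Lemma sum_f_R0_stencil (A1 A2 A3 A4 A5 : nat -> R) c n :
  sum_f_R0 (fun k => c * (4 * A1 k - A2 k - A3 k - A4 k - A5 k)) n =
  c * (4 * sum_f_R0 A1 n - sum_f_R0 A2 n - sum_f_R0 A3 n - sum_f_R0 A4 n - sum_f_R0 A5 n).
Proof. induction n; simpl. ring. rewrite IHn. ring. Qed.

Lemma uext_interior N (u : nat -> nat -> R) i j :
  (1 <= i <= N - 1)%nat -> (1 <= j <= N - 1)%nat -> uext N u i j = u i j.
Proof.
  intros Hi Hj. unfold uext, Defs.interior.
  replace (Nat.leb 1 i) with true by (symmetry; apply Nat.leb_le; lia).
  replace (Nat.leb i (N - 1)) with true by (symmetry; apply Nat.leb_le; lia).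
  replace (Nat.leb 1 j) with true by (symmetry; apply Nat.leb_le; lia).
  replace (Nat.leb j (N - 1)) with true by (symmetry; apply Nat.leb_le; lia). reflexivity.
Qed.

(* The five-point formula written as the scheme's double sum, with the limit coefficients;
   the neighbours outside the interior are exactly the terms that [uext] sets to [0]. *)
Lemma five_point_sum L N (u : nat -> nat -> R) i j : (2 <= N)%nat ->
  (1 <= i <= N - 1)%nat -> (1 <= j <= N - 1)%nat ->
  five_point L N u i j = sum_f_R0 (fun k => sum_f_R0 (fun q =>
     - coef_limit (gridh L N) (absdiff (S k) i) (absdiff (S q) j) * u (S k) (S q)) (N - 2)) (N - 2).
Proof.
  intros HN Hi Hj. set (h := gridh L N).
  rewrite (sum_eq _ (fun k => / h ^ 2 * (4 * sum_f_R0 (fun q => kron (S k) i * kron (S q) j * u (S k) (S q)) (N - 2)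
       - sum_f_R0 (fun q => kron (S k) (i + 1) * kron (S q) j * u (S k) (S q)) (N - 2)
       - sum_f_R0 (fun q => kron (S k) (i - 1) * kron (S q) j * u (S k) (S q)) (N - 2)
       - sum_f_R0 (fun q => kron (S k) i * kron (S q) (j + 1) * u (S k) (S q)) (N - 2)
       - sum_f_R0 (fun q => kron (S k) i * kron (S q) (j - 1) * u (S k) (S q)) (N - 2)))).
  2: { intros k _. rewrite <- sum_f_R0_stencil. apply sum_eq. intros q _.
       rewrite coef_limit_stencil by lia. unfold Rdiv. ring. }
  rewrite (sum_f_R0_stencil
    (fun k => sum_f_R0 (fun q => kron (S k) i * kron (S q) j * u (S k) (S q)) (N - 2))
    (fun k => sum_f_R0 (fun q => kron (S k) (i + 1) * kron (S q) j * u (S k) (S q)) (N - 2))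
    (fun k => sum_f_R0 (fun q => kron (S k) (i - 1) * kron (S q) j * u (S k) (S q)) (N - 2))
    (fun k => sum_f_R0 (fun q => kron (S k) i * kron (S q) (j + 1) * u (S k) (S q)) (N - 2))
    (fun k => sum_f_R0 (fun q => kron (S k) i * kron (S q) (j - 1) * u (S k) (S q)) (N - 2))).
  rewrite !sum_kron2 by auto.
  unfold five_point. fold h. rewrite (uext_interior N u i j) by auto. unfold Rdiv. ring.
Qed.

Lemma lim_left_scheme L N (u : nat -> nat -> R) i j : 0 < L -> (1 <= N)%nat ->
  (1 <= i <= N - 1)%nat -> (1 <= j <= N - 1)%nat ->
  is_lim_left (fun a => scheme L N a u i j) 2 (five_point L N u i j).
Proof.
  intros HL HN Hi Hj. rewrite five_point_sum by lia.
  apply is_lim_left_ext_loc with (fun a => sum_f_R0 (fun k => sum_f_R0 (fun q =>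
     - (c2 a * acoef L N a (absdiff (S k) i) (absdiff (S q) j)) * u (S k) (S q)) (N - 2)) (N - 2)).
  { exists 1. split. lra. intros a Ha. unfold scheme.
    rewrite sum_f_R0_mult_l. apply sum_eq. intros k _. rewrite sum_f_R0_mult_l. apply sum_eq. intros q _. ring. }
  apply is_lim_left_sum. intros k _. apply is_lim_left_sum. intros q _.
  apply is_lim_left_mult. apply is_lim_left_opp. apply lim_left_c2_acoef; auto. apply is_lim_left_const.
Qed.

Theorem mainTheorem8 (L : R) (N : nat) (HL : 0 < L) (HN : (1 <= N)%nat) :
  let h := gridh L N in
  is_lim_left (fun a => c2 a * acoef L N a 1 0) 2 (1 / h ^ 2) /\
  is_lim_left (fun a => c2 a * acoef L N a 0 1) 2 (1 / h ^ 2) /\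
  (forall m n : nat, (m + n > 1)%nat ->
     is_lim_left (fun a => c2 a * acoef L N a m n) 2 0) /\
  is_lim_left (fun a => c2 a * acoef L N a 0 0) 2 (- 4 / h ^ 2) /\
  is_lim_left (fun a => c2 a * Int2 (cell h 0 0) (xipow a)) 2 1 /\
  is_lim_left c2 2 0 /\
  (forall (u : nat -> nat -> R) (i j : nat),
     (1 <= i <= N - 1)%nat -> (1 <= j <= N - 1)%nat ->
     is_lim_left (fun a => scheme L N a u i j) 2 (five_point L N u i j)).
Proof.
  intros h. repeat split.
  - exact (lim_left_c2_acoef L N 1 0 HL HN).
  - exact (lim_left_c2_acoef L N 0 1 HL HN).
  - intros m n Hmn. rewrite <- (coef_limit_far h m n Hmn). apply lim_left_c2_acoef; auto.
  - exact (lim_left_c2_acoef L N 0 0 HL HN).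
  - apply lim_left_c2_Int2_cell00; auto.
  - exact lim_left_c2.
  - intros u i j Hi Hj. apply lim_left_scheme; auto.
Qed.
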